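(* Let $M$, $\alpha,\beta,\gamma$ satisfy the standing assumptions described in the context, let $T>0$ and $b$ be as fixed in the context, and for $\xi\in\mathbb{R}^n$ let $W(t,\xi)\in\mathbb{C}^2$ be any solution on $[T,\infty)$ of $$\partial_t W=\begin{pmatrix}-2b(t)& i|\xi|\\ i|\xi|&0\end{pmatrix}W .$$ Then there exist positive constants $N$ and $K_1$ such that, for all $(t,\xi)\in Z_H$ with $\xi\neq0$: if $\alpha>0$, then $K_1^{-1}|W(t_\xi,\xi)|\le|W(t,\xi)|\le K_1|W(t_\xi,\xi)|$; if $\alpha\le0$, then $K_1^{-1}|W(T,\xi)|\le|W(t,\xi)|\le K_1|W(T,\xi)|$.
   Context: Standing assumptions: $M:[0,\infty)\to\mathbb{R}$ continuous; $\alpha\le1$, $\beta<1$, $\gamma>0$ with $\gamma\ge\beta\ge(\alpha+1)/2$ if $\alpha\ne0$ and $\gamma\ge\beta>1/2$ if $\alpha=0$; $M$ satisfies: (M1) if $\alpha\ge 0$, $\int_0^t\big|\int_s^\infty\int_\sigma^\infty M(\tau)\,d\tau\,d\sigma\big|\,ds\lesssim(1+t)^{\alpha}$; if $\alpha\le 0$, $\int_t^\infty\big|\int_s^\infty\int_\sigma^\infty M(\tau)\,d\tau\,d\sigma\big|\,ds\lesssim(1+t)^{\alpha}$ (both when $\alpha=0$); (M2) $|M(t)|\lesssim(1+t)^{-2\beta}$; (M3) $\big|\int_t^\infty M\big|\lesssim(1+t)^{-\gamma}$, $\int_t^\infty\big(\int_s^\infty M\big)^2ds\lesssim(1+t)^{-\gamma}$,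 $\int_0^\infty\int_t^\infty\big(\int_s^\infty M\big)^2\,ds\,dt<\infty$; here $f\lesssim g$ means $f\le Cg$ with $C$ independent of $t$, and the moreover the condition $\sup_{t\ge0}(1+t)^\alpha\int_t^\infty\int_s^\infty(\int_\sigma^\infty M)^2\,d\sigma\,ds<\infty$ holds. Definition of $b$ and $T$: $q_1:=M$, $Q_k(t):=-\int_t^\infty q_k$, $q_k:=\sum_{j=1}^{k-1}Q_jQ_{k-j}$ ($k\ge 2$), $\phi(t):=-\int_t^\infty Q_2$; $T>0$ is chosen so that $|\int_t^\infty Q_1(s)\,ds|\le1$ and $\phi(t)\le 6^{-4}$ for all $t\ge T$, and $b(t):=\sum_{k\ge1}Q_k(t)$ on $[T,\infty)$ (this series converges, $b$ solves $b'+b^2+M=0$, and $|b(t)|\lesssim(1+t)^{-\gamma}$, $|b'(t)|\lesssim(1+t)^{-2\beta}$, $|\int_t^\infty b|$ bounded for $t\ge T$). Zones: for $N>0$, $Z_H:=\{(t,\xi)\in[T,\infty)\times\mathbb{R}^n:(1+t)^\alpha|\xi|\ge N\}$, and for $\alpha\ne0$, $\xi\ne0$, $t_\xi:=\max\{T,(N|\xi|^{-1})^{1/\alpha}-1\}$. *)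

From Stdlib Require Import Reals.
From Coquelicot Require Import Coquelicot.
From mathcomp Require Import ssreflect ssrbool ssrnat seq fintype bigop.

Open Scope R_scope.

Definition Iinf (f : R -> R) (t : R) : R :=
  RInt_gen f (at_point t) (Rbar_locally p_infty).

Definition ex_Iinf (f : R -> R) (t : R) : Prop :=
  ex_RInt_gen f (at_point t) (Rbar_locally p_infty).

(* q_k from the table P of Q_1..Q_{k-1}:
   q_1 = M,  q_k = sum_{j=1}^{k-1} Q_j Q_{k-j}  (k >= 2) *)
Definition qstep (M : R -> R) (P : nat -> R -> R) (k : nat) : R -> R :=
  if Nat.eqb k 1 then M
  else fun t => foldr Rplus 0 (map (fun j => P j t * P (k - j)%nat t) (iota 1 (k - 1))).

(* Qtab M n j = Q_j for 1 <= j <= n *)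
Fixpoint Qtab (M : R -> R) (n : nat) : nat -> R -> R :=
  match n with
  | O => fun _ _ => 0
  | S m => fun j =>
      if Nat.leb j m then Qtab M m j
      else (fun t => - Iinf (qstep M (Qtab M m) (S m)) t)
  end.

(* Q_k(t) = - \int_t^\infty q_k *)
Definition Qk (M : R -> R) (k : nat) : R -> R := Qtab M k k.

Definition qk (M : R -> R) (k : nat) : R -> R := qstep M (Qtab M (k - 1)) k.

Definition phi (M : R -> R) (t : R) : R := - Iinf (Qk M 2) t.

Definition bfun (M : R -> R) (t : R) : R := Series (fun k => Qk M (S k) t).

Definition vnorm (n : nat) (xi : 'I_n -> R) : R :=
  sqrt (\big[Rplus/0]_(i < n) (xi i * xi i)).

Definition C2norm (w : C * C) : R :=
  sqrt (Cmod (fst w) ^ 2 + Cmod (snd w) ^ 2).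

Definition deriv_on_from (T : R) (f : R -> C) (f' : R -> C) : Prop :=
  forall t, T <= t ->
    filterdiff (K := R_AbsRing) (U := R_NormedModule) (V := C_R_NormedModule)
      f (within (fun x => T <= x) (locally t)) (fun h => scal h (f' t)).

Definition Ci (r : R) : C := (0, r).

Definition solves_W (b : R -> R) (r T : R) (W : R -> C * C) : Prop :=
  deriv_on_from T (fun t => fst (W t))
    (fun t => (RtoC (-2 * b t) * fst (W t) + Ci r * snd (W t))%C) /\
  deriv_on_from T (fun t => snd (W t))
    (fun t => (Ci r * fst (W t))%C).

Definition t_xi (T N alpha r : R) : R :=
  Rmax T (Rpower (N / r) (/ alpha) - 1).

(* Write b through its partial sums b_K = Q_1 + ... + Q_K. With psi t = int_t^oo (int_s^oo M)^2
   and Phi t = int_t^oo psi, the smallness of Phi propagates through the quadratic recursion for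
   the Q_k the bound 2^(k-2) |Q_k| <= 2 psi (k >= 2); hence b_K converges geometrically to b and
   |b_K'| <= |M| + (|int M| + 4 psi)^2. For a solution W = (u, v) and r = |xi|, the modified energy
   V = |W|^2 - 2 b_K Im (u conj v) / r is comparable to |W|^2 as soon as 2 |b_K| <= r, and along
   the flow |V' + 2 Q_1 V| <= (4 psi + 10 eps_K + 2 |b_K'| / r) V, where eps_K bounds |b - b_K|.
   Gronwall's lemma bounds the ratio of the energies at s < t by the exponential of
   2 |int_s^t Q_1| + 4 Phi s + 10 eps_K (t - s) + 2 int_s^t |b_K'| / r. In the hyperbolic zone the
   decay assumptions bound each term uniformly in xi, the eps_K term vanishes as K -> oo, and the
   estimate extends to the endpoint s by right continuity; both s = t_xi (alpha > 0) and s = T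
   (alpha <= 0) keep [s, t] inside the zone. *)

From Stdlib Require Import Reals.
From Coquelicot Require Import Coquelicot.
From mathcomp Require Import ssreflect ssrbool ssrnat seq fintype bigop.
From Stdlib Require Import Lra Lia FunctionalExtensionality Classical PropExtensionality.
From mathcomp Require Import zify eqtype.
Open Scope R_scope.

#[global] Instance locally_Filter (x : R) : Filter (locally x) :=
  @filter_filter _ _ (locally_filter x).
#[global] Instance within_locally_Filter (D : R -> Prop) (x : R) :
  Filter (within D (locally x)) := within_filter R D (locally x) (locally_Filter x).

#[global] Instance at_point_ProperFilter' (t : R) : ProperFilter' (at_point t) :=
  Proper_StrongProper _ (at_point_filter (T := R_UniformSpace) t).
#[global] Instance pinfty_ProperFilter' : ProperFilter' (Rbar_locally p_infty) :=
  Proper_StrongProper _ (Rbar_locally_filter p_infty).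

Section RealFilterlim.
Context {T : Type} {F : (T -> Prop) -> Prop} {FF : Filter F}.

Lemma filterlim_Rplus (f g : T -> R) a b :
  filterlim f F (locally a) -> filterlim g F (locally b) ->
  filterlim (fun x => f x + g x) F (locally (a + b)).
Proof.
move=> Hf Hg.
exact: (filterlim_comp_2 f g Rplus Hf Hg (filterlim_plus (V := R_NormedModule) a b)).
Qed.

Lemma filterlim_Rmult (f g : T -> R) a b :
  filterlim f F (locally a) -> filterlim g F (locally b) ->
  filterlim (fun x => f x * g x) F (locally (a * b)).
Proof.
move=> Hf Hg.
exact: (filterlim_comp_2 f g Rmult Hf Hg (filterlim_mult (K := R_AbsRing) a b)).
Qed.

Lemma filterlim_Ropp (f : T -> R) a :
  filterlim f F (locally a) -> filterlim (fun x => - f x) F (locally (- a)).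
Proof.
move=> Hf.
exact: (filterlim_comp _ _ _ f Ropp _ _ _ Hf (filterlim_opp (V := R_NormedModule) a)).
Qed.

Lemma filterlim_Rminus (f g : T -> R) a b :
  filterlim f F (locally a) -> filterlim g F (locally b) ->
  filterlim (fun x => f x - g x) F (locally (a - b)).
Proof. move=> Hf Hg; apply: filterlim_Rplus => //; exact: filterlim_Ropp. Qed.

Lemma filterlim_Rscal (f : T -> R) k a :
  filterlim f F (locally a) -> filterlim (fun x => k * f x) F (locally (k * a)).
Proof. by move=> Hf; apply: filterlim_Rmult => //; apply: filterlim_const. Qed.

End RealFilterlim.

Lemma filterlim_Rle {T : Type} {F : (T -> Prop) -> Prop} {FF : ProperFilter' F}
  (f g : T -> R) l1 l2 :
  F (fun x => f x <= g x) -> filterlim f F (locally l1) -> filterlim g F (locally l2) -> l1 <= l2.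
Proof. move=> H Hf Hg; exact: (filterlim_le f g l1 l2 H Hf Hg). Qed.

Lemma ball_RE (x e y : R) : ball x e y <-> Rabs (y - x) < e.
Proof. by []. Qed.

Lemma locally_gt (c x : R) : c < x -> locally x (fun y => c < y).
Proof.
move=> H; have H' : 0 < x - c by lra.
exists (mkposreal _ H') => y /ball_RE /= /Rabs_def2; lra.
Qed.

Lemma locally_lt (c x : R) : x < c -> locally x (fun y => y < c).
Proof.
move=> H; have H' : 0 < c - x by lra.
exists (mkposreal _ H') => y /ball_RE /= /Rabs_def2; lra.
Qed.

Lemma within_le_locally (T tau : R) :
  T < tau -> within (fun x => T <= x) (locally tau) = locally tau.
Proof.
move=> H; apply: functional_extensionality => P; apply: propositional_extensionality; split.
- move=> HP.
  have HP' : locally tau (fun x => T <= x -> P x) := HP.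
  apply: filter_imp (filter_and _ _ HP' (locally_gt T tau H)) => x [H1 H2]; apply: H1; lra.
- by move=> HP; apply: filter_imp HP => x Hx _.
Qed.

Lemma exp_le x y : x <= y -> exp x <= exp y.
Proof. by case/Rle_lt_or_eq_dec => [/exp_increasing/Rlt_le|->] //; apply: Rle_refl. Qed.

Section RealDerive.
Variables (f g : R -> R) (x df dg : R).
Hypotheses (Hf : is_derive f x df) (Hg : is_derive g x dg).

Lemma is_derive_eq l : df = l -> is_derive f x l.
Proof. by move=> <-. Qed.

Lemma is_derive_Rplus : is_derive (fun y => f y + g y) x (df + dg).
Proof. exact: (is_derive_plus f g x df dg Hf Hg). Qed.

Lemma is_derive_Rmult : is_derive (fun y => f y * g y) x (df * g x + f x * dg).
Proof. exact: (is_derive_mult f g x df dg Hf Hg Rmult_comm). Qed.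

Lemma is_derive_Rsqr : is_derive (fun y => f y ^ 2) x (2 * df * f x).
Proof.
apply: (is_derive_ext (fun y => f y * f y)); first by move=> y /=; ring.
rewrite (_ : 2 * df * f x = df * f x + f x * df); last ring.
exact: (is_derive_mult f f x df df Hf Hf Rmult_comm).
Qed.

Lemma is_derive_Rscal k : is_derive (fun y => k * f y) x (k * df).
Proof. exact: (is_derive_scal f x k df Hf). Qed.

Lemma is_derive_Ropp : is_derive (fun y => - f y) x (- df).
Proof. exact: (is_derive_opp f x df Hf). Qed.

Lemma is_derive_Rminus : is_derive (fun y => f y - g y) x (df - dg).
Proof. exact: (is_derive_minus f g x df dg Hf Hg). Qed.

Lemma is_derive_Rexp : is_derive (fun y => exp (f y)) x (df * exp (f x)).
Proof. exact: (is_derive_comp exp f x (exp (f x)) df (is_derive_exp (f x)) Hf). Qed.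

End RealDerive.

(** * Improper integrals *)

Definition cont_gt (f : R -> R) (a : R) := forall x, a < x -> continuous f x.

Lemma cont_gt_plus f g a : cont_gt f a -> cont_gt g a -> cont_gt (fun x => f x + g x) a.
Proof.
move=> Hf Hg x Hx; exact: (continuous_plus (V := R_NormedModule) f g x (Hf x Hx) (Hg x Hx)).
Qed.

Lemma cont_gt_mult f g a : cont_gt f a -> cont_gt g a -> cont_gt (fun x => f x * g x) a.
Proof. move=> Hf Hg x Hx; exact: (continuous_mult (K := R_AbsRing) f g x (Hf x Hx) (Hg x Hx)). Qed.

Lemma cont_gt_opp f a : cont_gt f a -> cont_gt (fun x => - f x) a.
Proof. move=> Hf x Hx; exact: (continuous_opp (V := R_NormedModule) f x (Hf x Hx)). Qed.

Lemma cont_gt_const c a : cont_gt (fun _ => c) a.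
Proof. move=> x _; exact: continuous_const. Qed.

Lemma cont_gt_scal f k a : cont_gt f a -> cont_gt (fun x => k * f x) a.
Proof. by move=> Hf; apply: cont_gt_mult => //; apply: cont_gt_const. Qed.

Lemma cont_gt_abs f a : cont_gt f a -> cont_gt (fun x => Rabs (f x)) a.
Proof. move=> Hf x Hx; exact: (continuous_Rabs_comp f x (Hf x Hx)). Qed.

Lemma cont_gt_ext f g a : (forall x, f x = g x) -> cont_gt f a -> cont_gt g a.
Proof. by move=> E; have -> : g = f by apply: functional_extensionality => x; rewrite E. Qed.

Lemma cont_gt_le f a b : a <= b -> cont_gt f a -> cont_gt f b.
Proof. move=> H Hf x Hx; apply: Hf; lra. Qed.

Lemma cont_gt_of_derive f df a : (forall x, a < x -> is_derive f x (df x)) -> cont_gt f a.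
Proof. move=> H x Hx; apply: ex_derive_continuous; exists (df x); exact: H. Qed.

Lemma ex_RInt_cont_gt (f : R -> R) a x y : cont_gt f a -> a < x -> a < y -> ex_RInt f x y.
Proof.
move=> Hc Hx Hy; apply: ex_RInt_continuous => z [Hz1 Hz2]; apply: Hc.
apply: Rlt_le_trans Hz1; by apply Rmin_case.
Qed.

Lemma filterlim_RInt_Iinf (f : R -> R) t : ex_Iinf f t ->
  filterlim (RInt f t) (Rbar_locally p_infty) (locally (Iinf f t)).
Proof.
move=> Hex P HP.
have [Q1 Q2 HQ1 [M HM] HQ] :=
  @RInt_gen_correct _ _ _ (at_point_ProperFilter' t) pinfty_ProperFilter' f Hex P HP.
exists (Rmax M t) => X HX.
have HX1 : M < X by apply: Rle_lt_trans HX; apply: Rmax_l.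
have HX2 : t < X by apply: Rle_lt_trans HX; apply: Rmax_r.
have [l [Hl Pl]] := HQ t X HQ1 (HM X HX1).
by rewrite /= (is_RInt_unique (V := R_CompleteNormedModule) _ _ _ _ Hl).
Qed.

Section ImproperIntegral.
Variables (f : R -> R) (a : R).
Hypothesis Hf : cont_gt f a.

Lemma Iinf_of_filterlim t l : a < t ->
  filterlim (RInt f t) (Rbar_locally p_infty) (locally l) -> ex_Iinf f t /\ Iinf f t = l.
Proof.
move=> Ht Hl.
have H : is_RInt_gen f (at_point t) (Rbar_locally p_infty) l.
  move=> P HP; have [M HM] := Hl P HP.
  apply: (Filter_prod _ _ _ (fun x => x = t) (fun y => Rmax M t < y)) => //.
    by exists (Rmax M t).
  move=> x y -> Hy; exists (RInt f t y); split.
  + apply: RInt_correct; apply: (ex_RInt_cont_gt _ a) => //.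
    apply: Rle_lt_trans Hy; apply: Rle_trans (Rmax_r M t); lra.
  + apply: HM; apply: Rle_lt_trans Hy; apply: Rmax_l.
split; first by exists l.
exact: (@is_RInt_gen_unique _ _ _ (at_point_ProperFilter' t) pinfty_ProperFilter' _ _ H).
Qed.

Lemma Iinf_Chasles t u : a < t -> t <= u -> ex_Iinf f t ->
  ex_Iinf f u /\ Iinf f t = RInt f t u + Iinf f u.
Proof.
move=> Ht Hu Hex.
have L : filterlim (RInt f u) (Rbar_locally p_infty) (locally (Iinf f t - RInt f t u)).
  apply: (filterlim_ext_loc (fun X => RInt f t X - RInt f t u)).
    exists u => X HX.
    rewrite -(RInt_Chasles f t u X); try (apply: (ex_RInt_cont_gt _ a) => //; lra).
    rewrite /plus /=; ring.
  exact: (filterlim_Rminus _ _ _ _ (filterlim_RInt_Iinf f t Hex) (filterlim_const _)).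
have [E1 E2] := Iinf_of_filterlim u _ ltac:(lra) L.
split => //; rewrite E2; ring.
Qed.

Hypothesis Hex : forall y, a < y -> ex_Iinf f y.

Lemma is_derive_Iinf x : a < x -> is_derive (Iinf f) x (- f x).
Proof.
move=> Hx; set c := (a + x) / 2.
have Hca : a < c by rewrite /c; lra.
have Hcx : c < x by rewrite /c; lra.
have H1 : is_derive (RInt f c) x (f x).
  apply: is_derive_RInt; last by apply: Hf.
  apply: filter_imp (locally_gt c x Hcx) => y Hy.
  apply: RInt_correct; apply: (ex_RInt_cont_gt _ a) => //; lra.
have H2 := is_derive_plus (fun _ => Iinf f c) (fun y => opp (RInt f c y)) x _ _
  (is_derive_const (Iinf f c) x) (is_derive_opp _ x _ H1).
rewrite /plus /zero /opp /= Rplus_0_l in H2.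
apply: is_derive_ext_loc H2.
apply: filter_imp (locally_gt c x Hcx) => y Hy.
have [_ ->] := Iinf_Chasles c y Hca (Rlt_le _ _ Hy) (Hex c Hca).
rewrite /plus /opp /=; ring.
Qed.

Lemma filterlim_Iinf_0 : filterlim (Iinf f) (Rbar_locally p_infty) (locally 0).
Proof.
have Ht : a < a + 1 by lra.
rewrite -(Rminus_diag (Iinf f (a + 1))).
apply: (filterlim_ext_loc (fun X => Iinf f (a + 1) - RInt f (a + 1) X)).
  exists (a + 1) => X HX.
  have [_ ->] := Iinf_Chasles (a + 1) X Ht (Rlt_le _ _ HX) (Hex _ Ht); ring.
exact: (filterlim_Rminus _ _ _ _ (filterlim_const _) (filterlim_RInt_Iinf f _ (Hex _ Ht))).
Qed.

Lemma is_derive_opp_Iinf x : a < x -> is_derive (fun y => - Iinf f y) x (f x).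
Proof.
move=> Hx; have := is_derive_opp _ _ _ (is_derive_Iinf x Hx).
by rewrite /opp /= Ropp_involutive.
Qed.

End ImproperIntegral.

Lemma Iinf_le (f g : R -> R) a t : cont_gt f a -> cont_gt g a -> a < t ->
  ex_Iinf f t -> ex_Iinf g t -> (forall x, t <= x -> f x <= g x) -> Iinf f t <= Iinf g t.
Proof.
move=> Hf Hg Ht Ef Eg Hle.
apply: (filterlim_Rle (RInt f t) (RInt g t) _ _ _
  (filterlim_RInt_Iinf f t Ef) (filterlim_RInt_Iinf g t Eg)).
exists t => X HX; apply: RInt_le; try (apply: (ex_RInt_cont_gt _ a) => //; lra); first lra.
move=> x Hx; apply: Hle; lra.
Qed.

Lemma Iinf_ge0 (g : R -> R) a t : cont_gt g a -> a < t -> ex_Iinf g t ->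
  (forall x, t <= x -> 0 <= g x) -> 0 <= Iinf g t.
Proof.
move=> Hg Ht Eg Hle.
apply: (filterlim_Rle (fun _ => 0) (RInt g t) _ _ _
  (filterlim_const _) (filterlim_RInt_Iinf g t Eg)).
exists t => X HX; apply: RInt_ge_0; first lra.
  apply: (ex_RInt_cont_gt _ a) => //; lra.
move=> x Hx; apply: Hle; lra.
Qed.

Lemma Iinf_plus (f g : R -> R) a t : cont_gt f a -> cont_gt g a -> a < t ->
  ex_Iinf f t -> ex_Iinf g t ->
  ex_Iinf (fun x => f x + g x) t /\ Iinf (fun x => f x + g x) t = Iinf f t + Iinf g t.
Proof.
move=> Hf Hg Ht Ef Eg.
apply: (Iinf_of_filterlim _ a (cont_gt_plus _ _ _ Hf Hg)) => //.
apply: (filterlim_ext_loc (fun X => RInt f t X + RInt g t X)).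
  exists t => X HX.
  by rewrite (RInt_plus (V := R_CompleteNormedModule)) //; apply: (ex_RInt_cont_gt _ a) => //; lra.
exact: filterlim_Rplus (filterlim_RInt_Iinf f t Ef) (filterlim_RInt_Iinf g t Eg).
Qed.

Lemma Iinf_scal (f : R -> R) k a t : cont_gt f a -> a < t -> ex_Iinf f t ->
  ex_Iinf (fun x => k * f x) t /\ Iinf (fun x => k * f x) t = k * Iinf f t.
Proof.
move=> Hf Ht Ef.
apply: (Iinf_of_filterlim _ a (cont_gt_scal _ _ _ Hf)) => //.
apply: (filterlim_ext_loc (fun X => k * RInt f t X)).
  exists t => X HX.
  by rewrite (RInt_scal (V := R_CompleteNormedModule)) //; apply: (ex_RInt_cont_gt _ a) => //; lra.
exact: filterlim_Rscal (filterlim_RInt_Iinf f t Ef).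
Qed.

Lemma Iinf_opp (f : R -> R) a t : cont_gt f a -> a < t -> ex_Iinf f t ->
  ex_Iinf (fun x => - f x) t /\ Iinf (fun x => - f x) t = - Iinf f t.
Proof.
move=> Hf Ht Ef.
have -> : (fun x => - f x) = (fun x => -1 * f x) by apply: functional_extensionality => x; ring.
have [E ->] := Iinf_scal f (-1) a t Hf Ht Ef; split => //; ring.
Qed.

Lemma Rabs_Iinf_le (f : R -> R) a t : cont_gt f a -> a < t -> ex_Iinf f t ->
  ex_Iinf (fun x => Rabs (f x)) t -> Rabs (Iinf f t) <= Iinf (fun x => Rabs (f x)) t.
Proof.
move=> Hf Ht Ef Ea.
have Ha := cont_gt_abs _ _ Hf.
have H1 := Iinf_le f _ a t Hf Ha Ht Ef Ea (fun x _ => Rle_abs (f x)).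
have [Eo Io] := Iinf_opp _ a t Ha Ht Ea.
have H2 := Iinf_le (fun x => - Rabs (f x)) f a t (cont_gt_opp _ _ Ha) Hf Ht Eo Ef
  (fun x _ => proj1 (proj1 (Rabs_le_between _ _) (Rle_refl (Rabs (f x))))).
rewrite Io in H2; apply: Rabs_le; lra.
Qed.

Lemma nondecreasing_bounded_cvg (F : R -> R) t B :
  (forall x y, t <= x -> x <= y -> F x <= F y) -> (forall x, t <= x -> F x <= B) ->
  exists l, filterlim F (Rbar_locally p_infty) (locally l).
Proof.
move=> Hm Hb.
set E := fun y => exists x, t <= x /\ y = F x.
have HE : bound E by exists B => y [x [Hx ->]]; apply: Hb.
have HE2 : exists y, E y by exists (F t), t; split => //; lra.
have [l [Hub Hlub]] := completeness E HE HE2.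
exists l; apply/filterlim_locally => eps.
have [y Hy'] : exists y, ~ (E y -> y <= l - eps).
  apply: not_all_ex_not => H; have := Hlub _ H; have := cond_pos eps; lra.
have [[x0 [Hx0 Ey]] Hy] := imply_to_and _ _ Hy'; rewrite Ey in Hy.
exists x0 => X HX; apply/ball_RE.
have H1 : F x0 <= F X by apply: Hm; lra.
have H2 : F X <= l by apply: Hub; exists X; split => //; lra.
apply: Rabs_def1; lra.
Qed.

Lemma ex_Iinf_dominated (f g : R -> R) a t : cont_gt f a -> cont_gt g a -> a < t ->
  (forall x, t <= x -> Rabs (f x) <= g x) -> ex_Iinf g t -> ex_Iinf f t.
Proof.
move=> Hf Hg Ht Hle Eg.
set h := fun x => f x + g x.
have Hh : cont_gt h a by apply: cont_gt_plus.
have Lh : forall x y, t <= x -> t <= y -> ex_RInt h x y.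
  by move=> x y Hx Hy; apply: (ex_RInt_cont_gt _ a) => //; lra.
have h0 : forall x, t <= x -> 0 <= h x.
  move=> x Hx; have := Hle x Hx; have := Rle_abs (- f x); rewrite Rabs_Ropp /h; lra.
have h2g : forall x, t <= x -> h x <= 2 * g x.
  move=> x Hx; have := Hle x Hx; have := Rle_abs (f x); rewrite /h; lra.
have [l Hl] : exists l, filterlim (RInt h t) (Rbar_locally p_infty) (locally l).
  apply: (nondecreasing_bounded_cvg _ t (2 * Iinf g t)).
    move=> x y Hx Hxy; rewrite -(RInt_Chasles h t x y); try (apply: Lh; lra).
    have := RInt_ge_0 h x y Hxy (Lh x y Hx ltac:(lra)) ltac:(move=> z Hz; apply: h0; lra).
    rewrite /plus /=; lra.
  move=> x Hx.
  have [Ex ->] := Iinf_Chasles g a Hg t x Ht Hx Eg.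
  have := Iinf_ge0 g a x Hg ltac:(lra) Ex
    ltac:(move=> z Hz; have := Hle z ltac:(lra); have := Rabs_pos (f z); lra).
  have : RInt h t x <= RInt (fun z => 2 * g z) t x.
    apply: RInt_le => //; try (apply: Lh; lra).
      apply: (ex_RInt_cont_gt _ a); [exact: cont_gt_scal|lra|lra].
    move=> z Hz; apply: h2g; lra.
  rewrite (RInt_scal (V := R_CompleteNormedModule)); last by apply: (ex_RInt_cont_gt _ a) => //; lra.
  rewrite /scal /= /mult /=; have := RInt_ge_0 g t x Hx ltac:(apply: (ex_RInt_cont_gt _ a) => //; lra)
    ltac:(move=> z Hz; have := Hle z ltac:(lra); have := Rabs_pos (f z); lra).
  lra.
apply: (proj1 (Iinf_of_filterlim f a Hf t (l - Iinf g t) Ht _)).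
apply: (filterlim_ext_loc (fun X => RInt h t X - RInt g t X)).
  exists t => X HX.
  rewrite /h (RInt_plus (V := R_CompleteNormedModule)); try (apply: (ex_RInt_cont_gt _ a) => //; lra).
  rewrite /plus /=; ring.
exact: (filterlim_Rminus _ _ _ _ Hl (filterlim_RInt_Iinf g t Eg)).
Qed.

Lemma nonincreasing_of_derive (f df : R -> R) x y : x <= y ->
  (forall z, x <= z <= y -> is_derive f z (df z)) -> (forall z, x <= z <= y -> df z <= 0) ->
  f y <= f x.
Proof.
move=> Hxy Hd Hn.
have Hin : forall z, Rmin x y <= z <= Rmax x y -> x <= z <= y.
  by move=> z; rewrite /Rmin /Rmax; case: Rle_dec; lra.
have [c [/Hin Hc E]] : exists c, Rmin x y <= c <= Rmax x y /\ f y - f x = df c * (y - x).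
  apply: (MVT_gen f x y df) => z Hz; first by apply: Hd; apply: Hin; lra.
  apply/continuity_pt_filterlim; apply: ex_derive_continuous.
  by exists (df z); apply: Hd; apply: Hin.
have := Hn c Hc; have : 0 <= y - x by lra.
move=> H1 H2; have : df c * (y - x) <= 0 by apply: Rmult_le_0_r.
lra.
Qed.

Lemma ge0_of_nonincreasing_to0 (f : R -> R) t :
  (forall x y, t <= x -> x <= y -> f y <= f x) ->
  filterlim f (Rbar_locally p_infty) (locally 0) -> 0 <= f t.
Proof.
move=> Hm Hl.
apply: (filterlim_Rle f (fun _ => f t) _ _ _ Hl (filterlim_const _)).
exists t => X HX; apply: Hm; lra.
Qed.

Lemma gronwall_exp (V dV G g : R -> R) x y : x <= y ->
  (forall z, x <= z <= y -> is_derive V z (dV z)) -> (forall z, x <= z <= y -> is_derive G z (g z)) ->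
  (forall z, x <= z <= y -> dV z + V z * g z <= 0) -> V y <= V x * exp (G x - G y).
Proof.
move=> Hxy HV HG Hle.
have M : V y * exp (G y) <= V x * exp (G x).
  apply: (nonincreasing_of_derive (fun z => V z * exp (G z))
    (fun z => dV z * exp (G z) + V z * (g z * exp (G z)))) => //.
    by move=> z Hz; apply: is_derive_Rmult; [apply: HV|apply: is_derive_Rexp; apply: HG].
  move=> z Hz; have := Hle z Hz; have := exp_pos (G z); nra.
rewrite /Rminus exp_plus exp_Ropp -Rmult_assoc.
apply: (Rmult_le_reg_r (exp (G y))); first exact: exp_pos.
by rewrite Rmult_assoc Rinv_l ?Rmult_1_r //; have := exp_pos (G y); lra.
Qed.

Definition fsum (F : nat -> R) (a n : nat) : R := foldr Rplus 0 (map F (iota a n)).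

Lemma fsum0 F a : fsum F a 0 = 0. Proof. by []. Qed.

Lemma fsumS F a n : fsum F a n.+1 = F a + fsum F a.+1 n. Proof. by []. Qed.

Lemma fsumSr F a n : fsum F a n.+1 = fsum F a n + F (a + n)%N.
Proof.
elim: n a => [|n IH] a; first by rewrite /fsum /= addn0; ring.
by rewrite fsumS IH fsumS addSnnS; ring.
Qed.

Lemma eq_fsum F G a n : (forall i, (a <= i)%N -> (i < a + n)%N -> F i = G i) ->
  fsum F a n = fsum G a n.
Proof.
elim: n a => [|n IH] a H //.
rewrite !fsumS (H a) ?IH //; try lia.
move=> i H1 H2; apply: H; lia.
Qed.

Lemma fsum_le F G a n : (forall i, (a <= i)%N -> (i < a + n)%N -> F i <= G i) ->
  fsum F a n <= fsum G a n.
Proof.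
elim: n a => [|n IH] a H; first by rewrite /fsum /=; lra.
rewrite !fsumS; apply: Rplus_le_compat; first (apply: H; lia).
apply: IH => i H1 H2; apply: H; lia.
Qed.

Lemma fsum_ge0 F a n : (forall i, (a <= i)%N -> (i < a + n)%N -> 0 <= F i) -> 0 <= fsum F a n.
Proof.
move=> H; have := fsum_le (fun _ => 0) F a n H.
suff -> : fsum (fun _ => 0) a n = 0 by [].
by elim: n a {H} => [|n IH] a //; rewrite fsumS IH; ring.
Qed.

Lemma Rabs_fsum_le F a n : Rabs (fsum F a n) <= fsum (fun i => Rabs (F i)) a n.
Proof.
elim: n a => [|n IH] a; first by rewrite /fsum /= Rabs_R0; lra.
rewrite !fsumS; apply: Rle_trans (Rabs_triang _ _) _.
have := IH a.+1; lra.
Qed.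

Lemma fsumD F G a n : fsum (fun i => F i + G i) a n = fsum F a n + fsum G a n.
Proof. elim: n a => [|n IH] a; first by rewrite /fsum /=; ring. rewrite !fsumS IH; ring. Qed.

Lemma fsum_mulr F c a n : c * fsum F a n = fsum (fun i => c * F i) a n.
Proof. elim: n a => [|n IH] a; first by rewrite /fsum /=; ring. rewrite !fsumS -IH; ring. Qed.

Lemma fsum_le_len (w : nat -> R) a m n : (forall i, 0 <= w i) -> (m <= n)%N ->
  fsum w a m <= fsum w a n.
Proof.
move=> Hw; elim: n => [|n IH] Hmn.
  by rewrite (_ : m = 0%N); [apply: Rle_refl|lia].
case: (leqP m n) => H; last by rewrite (_ : m = n.+1); [apply: Rle_refl|lia].
rewrite fsumSr; have := IH H; have := Hw (a + n)%N; lra.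
Qed.

Lemma is_derive_fsum (F dF : nat -> R -> R) a n x :
  (forall i, (a <= i)%N -> (i < a + n)%N -> is_derive (F i) x (dF i x)) ->
  is_derive (fun y => fsum (fun i => F i y) a n) x (fsum (fun i => dF i x) a n).
Proof.
elim: n a => [|n IH] a H; first exact: is_derive_const.
rewrite fsumS; apply: (is_derive_ext (fun y => plus (F a y) (fsum (fun i => F i y) a.+1 n))) => //.
apply: is_derive_plus; first (apply: H; lia).
apply: IH => i H1 H2; apply: H; lia.
Qed.

Lemma cont_gt_fsum (F : nat -> R -> R) a n b :
  (forall i, (a <= i)%N -> (i < a + n)%N -> cont_gt (F i) b) ->
  cont_gt (fun y => fsum (fun i => F i y) a n) b.
Proof.
elim: n a => [|n IH] a H; first exact: cont_gt_const.
apply: (cont_gt_ext (fun y => F a y + fsum (fun i => F i y) a.+1 n)) => //.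
apply: cont_gt_plus; first (apply: H; lia).
apply: IH => i H1 H2; apply: H; lia.
Qed.

Lemma filterlim_fsum_0 (F : nat -> R -> R) a n :
  (forall i, (a <= i)%N -> (i < a + n)%N -> filterlim (F i) (Rbar_locally p_infty) (locally 0)) ->
  filterlim (fun t => fsum (fun i => F i t) a n) (Rbar_locally p_infty) (locally 0).
Proof.
elim: n a => [|n IH] a H; first exact: filterlim_const.
apply: (filterlim_ext (fun t => F a t + fsum (fun i => F i t) a.+1 n)) => //.
rewrite -(Rplus_0_r 0); apply: filterlim_Rplus; first (apply: H; lia).
apply: IH => i H1 H2; apply: H; lia.
Qed.

Lemma fsum_convolution (w : nat -> R) n :
  fsum (fun k => fsum (fun j => w j * w (k - j)%N) 1 (k - 1)) 2 n =
  fsum (fun j => w j * fsum w 1 (n + 1 - j)) 1 n.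
Proof.
elim: n => [|n IH] //.
rewrite fsumSr IH.
rewrite (eq_fsum (fun j => w j * fsum w 1 (n.+1 + 1 - j))
                 (fun j => w j * fsum w 1 (n + 1 - j) + w j * w (n.+2 - j)%N)); last first.
  move=> i H1 H2; have -> : (n.+1 + 1 - i = (n + 1 - i).+1)%N by lia.
  rewrite fsumSr; have -> : (1 + (n + 1 - i) = n.+2 - i)%N by lia.
  ring.
rewrite fsumD fsumSr.
have -> : (n + 1 - (1 + n) = 0)%N by lia.
rewrite fsum0 Rmult_0_r Rplus_0_r.
have -> : ((2 + n) - 1 = n.+1)%N by lia.
by rewrite (_ : (2 + n = n.+2)%N) //; ring.
Qed.

Lemma fsum_convolution_le_sqr (w : nat -> R) n : (forall i, 0 <= w i) ->
  fsum (fun k => fsum (fun j => w j * w (k - j)%N) 1 (k - 1)) 2 n <= (fsum w 1 n) ^ 2.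
Proof.
move=> Hw; rewrite fsum_convolution.
apply: Rle_trans (_ : fsum (fun j => fsum w 1 n * w j) 1 n <= _).
  apply: fsum_le => i H1 H2; rewrite Rmult_comm; apply: Rmult_le_compat_r; first exact: Hw.
  apply: fsum_le_len => //; lia.
rewrite -fsum_mulr; lra.
Qed.

(* The weights factor along the convolution: 2^(k-2) = 2^(j-1) 2^(k-j-1). *)
Lemma weighted_convolution_le (Qv : nat -> R) n :
  fsum (fun k => 2 ^ (k - 2) * Rabs (fsum (fun j => Qv j * Qv (k - j)%N) 1 (k - 1))) 2 n <=
  (fsum (fun j => 2 ^ (j - 1) * Rabs (Qv j)) 1 n) ^ 2.
Proof.
set w := fun j => 2 ^ (j - 1) * Rabs (Qv j).
have Hw : forall i, 0 <= w i.
  by move=> i; apply: Rmult_le_pos; [apply: pow_le; lra|apply: Rabs_pos].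
apply: Rle_trans (fsum_convolution_le_sqr w n Hw).
apply: fsum_le => k Hk1 Hk2.
apply: Rle_trans (_ : 2 ^ (k - 2) * fsum (fun j => Rabs (Qv j * Qv (k - j)%N)) 1 (k - 1) <= _).
  apply: Rmult_le_compat_l; [apply: pow_le; lra|apply: Rabs_fsum_le].
rewrite fsum_mulr; apply: Req_le; apply: eq_fsum => j Hj1 Hj2.
rewrite /w Rabs_mult.
have -> : (k - 2 = (j - 1) + (k - j - 1))%N by lia.
rewrite pow_add; ring.
Qed.

Lemma sum_n_fsum (F : nat -> R) n : sum_n (fun i => F i.+1) n = fsum F 1 n.+1.
Proof.
elim: n => [|n IH]; first by rewrite sum_O /fsum /=; ring.
by rewrite sum_Sn IH [RHS]fsumSr /plus /= (_ : (1 + n.+1 = n.+2)%N).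
Qed.

Lemma Rabs_Series_sub_sum_n (a : nat -> R) c n :
  (forall i, (n < i)%N -> Rabs (a i) <= c * (1 / 2) ^ i) ->
  Rabs (Series a - sum_n a n) <= c * (1 / 2) ^ n.
Proof.
move=> Ha.
have Hhalf : Rabs (1 / 2) < 1 by rewrite Rabs_pos_eq; lra.
set g := fun k => c * (1 / 2) ^ n.+1 * (1 / 2) ^ k.
have Hg : ex_series g by apply: ex_series_scal_l; apply: ex_series_geom.
have Hb : forall k, Rabs (a (n.+1 + k)%N) <= g k.
  by move=> k; rewrite /g Rmult_assoc -pow_add; apply: Ha; lia.
have Eb : ex_series (fun k => Rabs (a (n.+1 + k)%N)).
  by apply: (ex_series_le _ g) => // k; rewrite /norm /= /abs /= Rabs_Rabsolu.
have Ea : ex_series a by apply/(ex_series_incr_n a n.+1); exact: ex_series_Rabs.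
rewrite (Series_incr_n a n.+1) //; last by lia.
rewrite sum_n_Reals (_ : forall x y, x + y - x = y); last by move=> x y; ring.
apply: Rle_trans (Series_Rabs _ Eb) _.
apply: Rle_trans (Series_le _ g (fun k => conj (Rabs_pos _) (Hb k)) Hg) _.
rewrite /g Series_scal_l Series_geom //=; apply: Req_le; field.
Qed.

(** * The coefficients Q_k *)

Lemma Qtab_Qk M n j : (1 <= j)%N -> (j <= n)%N -> Qtab M n j = Qk M j.
Proof.
elim: n => [|n IH] H1 H2; first lia.
case: (leqP j n) => Hj; last by have -> : j = n.+1 by lia.
by rewrite /= (_ : Nat.leb j n = true) ?IH //; apply/Nat.leb_le; lia.
Qed.

Lemma Qk_Iinf M k : (0 < k)%N -> Qk M k = fun t => - Iinf (qk M k) t.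
Proof.
case: k => [//|n] _; rewrite /Qk /qk subn1 /=.
by rewrite -/(Nat.leb n.+1 n) (_ : Nat.leb n.+1 n = false) //; apply/Nat.leb_gt; lia.
Qed.

Lemma qk1 M : qk M 1 = M. Proof. by []. Qed.

Lemma Qk1 M : Qk M 1 = fun t => - Iinf M t. Proof. by rewrite Qk_Iinf. Qed.

Lemma qk_convolution M k : (2 <= k)%N ->
  qk M k = fun t => fsum (fun j => Qk M j t * Qk M (k - j) t) 1 (k - 1).
Proof.
move=> Hk; rewrite /qk /qstep (_ : Nat.eqb k 1 = false); last by apply/Nat.eqb_neq; lia.
apply: functional_extensionality => t.
rewrite -/(fsum (fun j => Qtab M (k - 1) j t * Qtab M (k - 1) (k - j) t) 1 (k - 1)).
by apply: eq_fsum => i H1 H2; rewrite !Qtab_Qk //; lia.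
Qed.

Definition sqI (M : R -> R) (s : R) : R := Iinf M s ^ 2.
Definition psi (M : R -> R) : R -> R := Iinf (sqI M).
Definition Phi (M : R -> R) : R -> R := Iinf (psi M).

Record tails_integrable (M : R -> R) : Prop := {
  tails_cont : cont_gt M 0;
  ex_Iinf_M : forall t, 0 < t -> ex_Iinf M t;
  ex_Iinf_IM : forall t, 0 < t -> ex_Iinf (Iinf M) t;
  ex_Iinf_sqI : forall t, 0 < t -> ex_Iinf (sqI M) t;
  ex_Iinf_psi : forall t, 0 < t -> ex_Iinf (psi M) t }.

Arguments tails_cont {M}.
Arguments ex_Iinf_M {M}.
Arguments ex_Iinf_IM {M}.
Arguments ex_Iinf_sqI {M}.
Arguments ex_Iinf_psi {M}.

Section Tails.
Variable M : R -> R.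
Hypothesis HM : tails_integrable M.

Lemma IM_cont : cont_gt (Iinf M) 0.
Proof.
exact: (cont_gt_of_derive _ (fun x => - M x) _
  (is_derive_Iinf M 0 (tails_cont HM) (ex_Iinf_M HM))).
Qed.

Lemma sqI_cont : cont_gt (sqI M) 0.
Proof.
apply: (cont_gt_ext (fun s => Iinf M s * Iinf M s)); first by move=> s; rewrite /sqI; ring.
by apply: cont_gt_mult; exact: IM_cont.
Qed.

Lemma sqI_ge0 t : 0 <= sqI M t.
Proof. exact: pow2_ge_0. Qed.

Lemma psi_derive t : 0 < t -> is_derive (psi M) t (- sqI M t).
Proof. exact: (is_derive_Iinf _ 0 sqI_cont (ex_Iinf_sqI HM)). Qed.

Lemma psi_cont : cont_gt (psi M) 0.
Proof. exact: (cont_gt_of_derive _ (fun x => - sqI M x) _ psi_derive). Qed.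

Lemma psi_ge0 t : 0 < t -> 0 <= psi M t.
Proof.
move=> Ht; apply: (Iinf_ge0 _ 0) => //; [exact: sqI_cont|exact: ex_Iinf_sqI|].
move=> x _; exact: sqI_ge0.
Qed.

Lemma psi_nonincreasing x y : 0 < x -> x <= y -> psi M y <= psi M x.
Proof.
move=> Hx Hy; apply: (nonincreasing_of_derive _ (fun z => - sqI M z)) => // z Hz.
  apply: psi_derive; lra.
have := sqI_ge0 z; lra.
Qed.

Lemma psi_to0 : filterlim (psi M) (Rbar_locally p_infty) (locally 0).
Proof. exact: (filterlim_Iinf_0 _ 0 sqI_cont (ex_Iinf_sqI HM)). Qed.

Lemma Phi_derive t : 0 < t -> is_derive (Phi M) t (- psi M t).
Proof. exact: (is_derive_Iinf _ 0 psi_cont (ex_Iinf_psi HM)). Qed.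

Lemma Phi_cont : cont_gt (Phi M) 0.
Proof. exact: (cont_gt_of_derive _ (fun x => - psi M x) _ Phi_derive). Qed.

Lemma Phi_ge0 t : 0 < t -> 0 <= Phi M t.
Proof.
move=> Ht; apply: (Iinf_ge0 _ 0) => //; [exact: psi_cont|exact: ex_Iinf_psi|].
move=> x Hx; apply: psi_ge0; lra.
Qed.

Lemma Phi_nonincreasing x y : 0 < x -> x <= y -> Phi M y <= Phi M x.
Proof.
move=> Hx Hy; apply: (nonincreasing_of_derive _ (fun z => - psi M z)) => // z Hz.
  apply: Phi_derive; lra.
have := psi_ge0 z ltac:(lra); lra.
Qed.

Lemma Phi_to0 : filterlim (Phi M) (Rbar_locally p_infty) (locally 0).
Proof. exact: (filterlim_Iinf_0 _ 0 psi_cont (ex_Iinf_psi HM)). Qed.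

Lemma phi_Phi t : 0 < t -> phi M t = Phi M t.
Proof.
move=> Ht.
have Eq2 : qk M 2 = sqI M.
  rewrite qk_convolution //; apply: functional_extensionality => y.
  by rewrite /fsum /= Qk1 /sqI; ring.
rewrite /phi Qk_Iinf // Eq2 -/(psi M).
have [_ ->] := Iinf_opp (psi M) 0 t psi_cont Ht (ex_Iinf_psi HM t Ht); rewrite /Phi; ring.
Qed.

Lemma Q1_cont : cont_gt (Qk M 1) 0.
Proof. rewrite Qk1; apply: cont_gt_opp; exact: IM_cont. Qed.

Lemma Iinf_Q1_derive t : 0 < t -> is_derive (Iinf (Qk M 1)) t (Iinf M t).
Proof.
have Hex : forall t, 0 < t -> ex_Iinf (Qk M 1) t.
  by move=> s Hs; rewrite Qk1; exact: (proj1 (Iinf_opp _ 0 s IM_cont Hs (ex_Iinf_IM HM s Hs))).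
by move=> Ht; have := is_derive_Iinf _ 0 Q1_cont Hex t Ht; rewrite Qk1 Ropp_involutive.
Qed.

End Tails.

Lemma sqr_add4_le (x y : R) : (x + 4 * y) ^ 2 <= 3 / 2 * x ^ 2 + 48 * (y * y).
Proof. have := pow2_ge_0 (x - 8 * y); nra. Qed.

Definition qk_abs_tail (M : R -> R) (k : nat) : R -> R := Iinf (fun s => Rabs (qk M k s)).

Definition weighted_tail_sum (M : R -> R) (K : nat) (t : R) : R :=
  fsum (fun k => 2 ^ (k - 2) * qk_abs_tail M k t) 2 (K - 1).

(* A supersolution of the recursion for the Q_k: by [sqr_add4_le], its derivative dominates
   that of [weighted_tail_sum], and it is at most 2 psi as soon as Phi <= 1/96. *)
Definition tail_majorant (M : R -> R) (t : R) : R := 3 / 2 * psi M t + 48 * (psi M t * Phi M t).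

Definition b_partial (M : R -> R) (K : nat) (t : R) : R := fsum (fun k => Qk M k t) 1 K.

Section QkBounds.
Variable M : R -> R.
Hypothesis HM : tails_integrable M.
Variable a : R.
Hypothesis Ha : 0 < a.
Hypothesis HPhi : Phi M a <= 2 / 1296.

Definition qk_regular (K : nat) : Prop :=
  forall k, (2 <= k)%N -> (k <= K)%N -> cont_gt (qk M k) a /\
    forall t, a < t -> ex_Iinf (qk M k) t /\ ex_Iinf (fun s => Rabs (qk M k s)) t.

Definition tail_sum_bounded (K : nat) : Prop :=
  forall t, a < t -> weighted_tail_sum M K t <= tail_majorant M t.

Lemma tail_majorant_le t : a < t -> tail_majorant M t <= 2 * psi M t.
Proof.
move=> Ht; rewrite /tail_majorant.
have := psi_ge0 M HM t ltac:(lra); have := Phi_nonincreasing M HM a t Ha ltac:(lra).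
nra.
Qed.

Lemma Qk_regular K : qk_regular K -> forall k, (1 <= k)%N -> (k <= K)%N ->
  cont_gt (Qk M k) a /\ forall t, a < t -> is_derive (Qk M k) t (qk M k t).
Proof.
move=> HG k Hk1 Hk2.
have [Hc He] : cont_gt (qk M k) a /\ forall t, a < t -> ex_Iinf (qk M k) t.
  case: (ltnP 1 k) => Hk; first by have [Hc He] := HG k Hk Hk2; split => // t /He [].
  rewrite (_ : k = 1%N) ?qk1; last lia.
  split; first exact: (cont_gt_le _ 0 a ltac:(lra) (tails_cont HM)).
  move=> t Ht; apply: (ex_Iinf_M HM); lra.
have D : forall t, a < t -> is_derive (Qk M k) t (qk M k t).
  by rewrite Qk_Iinf //; apply: is_derive_opp_Iinf.
split => //; exact: (cont_gt_of_derive _ (qk M k) a D).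
Qed.

Lemma Rabs_Qk_le_tail K : qk_regular K -> forall k t, (2 <= k)%N -> (k <= K)%N -> a < t ->
  Rabs (Qk M k t) <= qk_abs_tail M k t.
Proof.
move=> HG k t Hk1 Hk2 Ht.
have [Hc He] := HG k Hk1 Hk2; have [E1 E2] := He t Ht.
rewrite Qk_Iinf ?Rabs_Ropp; last lia.
exact: (Rabs_Iinf_le _ a t Hc Ht E1 E2).
Qed.

Lemma weighted_Qk_sum_le K : (1 <= K)%N -> qk_regular K -> tail_sum_bounded K ->
  forall t, a < t ->
  fsum (fun j => 2 ^ (j - 1) * Rabs (Qk M j t)) 1 K <= Rabs (Iinf M t) + 4 * psi M t.
Proof.
move=> HK HG HB t Ht.
rewrite (_ : K = (K - 1).+1); last lia.
rewrite fsumS Qk1 /= Rmult_1_l Rabs_Ropp.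
have : fsum (fun j => 2 ^ (j - 1) * Rabs (Qk M j t)) 2 (K - 1) <= 2 * weighted_tail_sum M K t.
  rewrite /weighted_tail_sum fsum_mulr; apply: fsum_le => k H1 H2.
  rewrite (_ : (k - 1 = (k - 2).+1)%N) /=; last lia.
  have := Rabs_Qk_le_tail K HG k t ltac:(lia) ltac:(lia) Ht.
  have : 0 <= 2 ^ (k - 2) by apply: pow_le; lra.
  nra.
have := HB t Ht; have := tail_majorant_le t Ht; lra.
Qed.

Lemma weighted_qk_sum_le K : (1 <= K)%N -> qk_regular K -> tail_sum_bounded K ->
  forall t, a < t ->
  fsum (fun k => 2 ^ (k - 2) * Rabs (qk M k t)) 2 K <= (Rabs (Iinf M t) + 4 * psi M t) ^ 2.
Proof.
move=> HK HG HB t Ht.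
rewrite (eq_fsum _
    (fun k => 2 ^ (k - 2) * Rabs (fsum (fun j => Qk M j t * Qk M (k - j)%N t) 1 (k - 1))));
  last by move=> k H1 H2; rewrite qk_convolution.
apply: Rle_trans (weighted_convolution_le (fun j => Qk M j t) K) _.
apply: pow_incr; split; last exact: weighted_Qk_sum_le.
apply: fsum_ge0 => i _ _; apply: Rmult_le_pos; [apply: pow_le; lra|apply: Rabs_pos].
Qed.

Lemma qk_next_cont K : (1 <= K)%N -> qk_regular K -> cont_gt (qk M K.+1) a.
Proof.
move=> HK HG.
apply: (cont_gt_ext (fun t => fsum (fun j => Qk M j t * Qk M (K.+1 - j)%N t) 1 (K.+1 - 1))).
  by move=> t; rewrite qk_convolution //; lia.
apply: cont_gt_fsum => j H1 H2.
by apply: cont_gt_mult;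
  [apply: (proj1 (Qk_regular K HG j _ _))|apply: (proj1 (Qk_regular K HG (K.+1 - j) _ _))]; lia.
Qed.

Lemma Rabs_qk_next_le K : (1 <= K)%N -> qk_regular K -> tail_sum_bounded K ->
  forall x, a < x -> Rabs (qk M K.+1 x) <= (Rabs (Iinf M x) + 4 * psi M x) ^ 2.
Proof.
move=> HK HG HB x Hx.
have X := weighted_qk_sum_le K HK HG HB x Hx.
rewrite {1}(_ : K = (K - 1).+1) in X; last lia.
rewrite fsumSr (_ : (2 + (K - 1) = K.+1)%N) in X; last lia.
rewrite (_ : (K.+1 - 2 = K - 1)%N) in X; last lia.
have : 1 <= 2 ^ (K - 1) by apply: pow_R1_Rle; lra.
have : 0 <= fsum (fun k => 2 ^ (k - 2) * Rabs (qk M k x)) 2 (K - 1).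
  apply: fsum_ge0 => i _ _; apply: Rmult_le_pos; [apply: pow_le; lra|apply: Rabs_pos].
have := Rabs_pos (qk M K.+1 x); nra.
Qed.

Lemma ex_Iinf_qk_next K : (1 <= K)%N -> qk_regular K -> tail_sum_bounded K ->
  forall t, a < t -> ex_Iinf (qk M K.+1) t /\ ex_Iinf (fun s => Rabs (qk M K.+1 s)) t.
Proof.
move=> HK HG HB t Ht.
have Hc := qk_next_cont K HK HG.
set g := fun x => 3 / 2 * sqI M x + 48 * psi M t * psi M x.
have Hgc : cont_gt g a.
  apply: (cont_gt_le _ 0); first lra.
  by apply: cont_gt_plus; apply: cont_gt_scal; [exact: (sqI_cont M HM)|exact: (psi_cont M HM)].
have Hgex : ex_Iinf g t.
  have Ht0 : 0 < t by lra.
  have [E1 _] := Iinf_scal (sqI M) (3 / 2) 0 t (sqI_cont M HM) Ht0 (ex_Iinf_sqI HM t Ht0).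
  have [E2 _] := Iinf_scal (psi M) (48 * psi M t) 0 t (psi_cont M HM) Ht0 (ex_Iinf_psi HM t Ht0).
  exact: (proj1 (Iinf_plus _ _ 0 t (cont_gt_scal _ _ _ (sqI_cont M HM))
    (cont_gt_scal _ _ _ (psi_cont M HM)) ltac:(lra) E1 E2)).
have Hb : forall x, t <= x -> Rabs (qk M K.+1 x) <= g x.
  move=> x Hx; apply: Rle_trans (Rabs_qk_next_le K HK HG HB x ltac:(lra)) _.
  apply: Rle_trans (sqr_add4_le _ _) _.
  rewrite /g /sqI pow2_abs.
  have := psi_ge0 M HM x ltac:(lra); have := psi_nonincreasing M HM t x ltac:(lra) Hx; nra.
split; first exact: (ex_Iinf_dominated _ g a t Hc Hgc Ht Hb Hgex).
apply: (ex_Iinf_dominated _ g a t (cont_gt_abs _ _ Hc) Hgc Ht) => // x Hx.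
rewrite Rabs_Rabsolu; exact: Hb.
Qed.

Lemma qk_regular_next K : (1 <= K)%N -> qk_regular K -> tail_sum_bounded K -> qk_regular K.+1.
Proof.
move=> HK HG HB k Hk1 Hk2; case: (leqP k K) => Hk; first exact: HG.
rewrite (_ : k = K.+1); last lia.
split; [exact: qk_next_cont|exact: ex_Iinf_qk_next].
Qed.

Lemma tail_sum_bounded_next K : (1 <= K)%N -> qk_regular K -> tail_sum_bounded K ->
  tail_sum_bounded K.+1.
Proof.
move=> HK HG HB t Ht.
have HG1 := qk_regular_next K HK HG HB.
set D := fun x => tail_majorant M x - weighted_tail_sum M K.+1 x.
set dD := fun x => (3 / 2 * (- sqI M x) + 48 * (- sqI M x * Phi M x + psi M x * (- psi M x))) -
  fsum (fun k => 2 ^ (k - 2) * (- Rabs (qk M k x))) 2 K.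
have Hd : forall x, a < x -> is_derive D x (dD x).
  move=> x Hx; rewrite /D /dD /tail_majorant /weighted_tail_sum (_ : (K.+1 - 1 = K)%N); last lia.
  apply: is_derive_Rminus; first apply: is_derive_Rplus; try apply: is_derive_Rscal.
  - by apply: (psi_derive M HM); lra.
  - by apply: is_derive_Rmult; [apply: (psi_derive M HM)|apply: (Phi_derive M HM)]; lra.
  apply: (is_derive_fsum (fun k y => 2 ^ (k - 2) * qk_abs_tail M k y)
    (fun k y => 2 ^ (k - 2) * - Rabs (qk M k y))) => i H1 H2.
  apply: is_derive_Rscal; have [Hc He] := HG1 i H1 ltac:(lia).
  exact: (is_derive_Iinf _ a (cont_gt_abs _ _ Hc) (fun y Hy => proj2 (He y Hy))).
have Hdn : forall x, a < x -> dD x <= 0.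
  move=> x Hx; rewrite /dD.
  have -> : fsum (fun k => 2 ^ (k - 2) * - Rabs (qk M k x)) 2 K =
            -1 * fsum (fun k => 2 ^ (k - 2) * Rabs (qk M k x)) 2 K.
    by rewrite fsum_mulr; apply: eq_fsum => i _ _; ring.
  have := weighted_qk_sum_le K HK HG HB x Hx.
  have := sqr_add4_le (Rabs (Iinf M x)) (psi M x); rewrite pow2_abs -/(sqI M x).
  have := psi_ge0 M HM x ltac:(lra); have := Phi_ge0 M HM x ltac:(lra); have := sqI_ge0 M x.
  nra.
suff : 0 <= D t by rewrite /D; lra.
apply: (ge0_of_nonincreasing_to0 D t).
  by move=> x y Hx Hy; apply: (nonincreasing_of_derive D dD) => // z Hz; [apply: Hd|apply: Hdn]; lra.
rewrite -(Rminus_0_r 0); apply: filterlim_Rminus.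
  have := filterlim_Rplus _ _ _ _ (filterlim_Rscal _ (3 / 2) _ (psi_to0 M HM))
    (filterlim_Rscal _ 48 _ (filterlim_Rmult _ _ _ _ (psi_to0 M HM) (Phi_to0 M HM))).
  by rewrite !Rmult_0_r Rplus_0_r; apply.
apply: filterlim_fsum_0 => i H1 H2; rewrite -(Rmult_0_r (2 ^ (i - 2))); apply: filterlim_Rscal.
have [Hc He] := HG1 i H1 ltac:(lia).
exact: (filterlim_Iinf_0 _ a (cont_gt_abs _ _ Hc) (fun y Hy => proj2 (He y Hy))).
Qed.

Lemma qk_regular_bounded K : (1 <= K)%N -> qk_regular K /\ tail_sum_bounded K.
Proof.
elim: K => [|K IH] HK; first lia.
case: (ltnP 0 K) => H0.
  have [HG HB] := IH H0.
  by split; [apply: qk_regular_next|apply: tail_sum_bounded_next].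
rewrite (_ : K.+1 = 1%N); last lia.
split; first by move=> k; lia.
move=> t Ht; rewrite /weighted_tail_sum fsum0 /tail_majorant.
have := psi_ge0 M HM t ltac:(lra); have := Phi_ge0 M HM t ltac:(lra); nra.
Qed.

Lemma Qk_le_psi k t : (2 <= k)%N -> a < t -> 2 ^ (k - 2) * Rabs (Qk M k t) <= 2 * psi M t.
Proof.
move=> Hk Ht.
have [HG HB] := qk_regular_bounded k ltac:(lia).
have H1 := Rabs_Qk_le_tail k HG k t Hk (leqnn k) Ht.
have H4 : 2 ^ (k - 2) * qk_abs_tail M k t <= weighted_tail_sum M k t.
  rewrite /weighted_tail_sum (_ : (k - 1 = (k - 2).+1)%N); last lia.
  rewrite fsumSr (_ : (2 + (k - 2) = k)%N); last lia.
  suff : 0 <= fsum (fun i => 2 ^ (i - 2) * qk_abs_tail M i t) 2 (k - 2) by lra.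
  apply: fsum_ge0 => i H5 H6; apply: Rmult_le_pos; first (apply: pow_le; lra).
  have [HGi _] := qk_regular_bounded i ltac:(lia).
  apply: Rle_trans (Rabs_pos (Qk M i t)) _; apply: (Rabs_Qk_le_tail i HGi i t) => //; lia.
have := HB t Ht; have := tail_majorant_le t Ht; have : 0 <= 2 ^ (k - 2) by apply: pow_le; lra.
nra.
Qed.

Lemma Rabs_fsum_Qk_le n t : a < t -> Rabs (fsum (fun k => Qk M k t) 2 n) <= 2 * psi M t.
Proof.
move=> Ht.
have [HG HB] := qk_regular_bounded n.+1 ltac:(lia).
apply: Rle_trans (Rabs_fsum_le _ _ _) _.
apply: Rle_trans (_ : _ <= weighted_tail_sum M n.+1 t) _; last first.
  by have := HB t Ht; have := tail_majorant_le t Ht; lra.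
rewrite /weighted_tail_sum (_ : (n.+1 - 1 = n)%N); last lia.
apply: fsum_le => i H1 H2.
have := Rabs_Qk_le_tail n.+1 HG i t H1 ltac:(lia) Ht.
have : 1 <= 2 ^ (i - 2) by apply: pow_R1_Rle; lra.
have := Rabs_pos (Qk M i t); nra.
Qed.

Lemma is_derive_b_partial K x : (1 <= K)%N -> a < x ->
  is_derive (b_partial M K) x (fsum (fun k => qk M k x) 1 K).
Proof.
move=> HK Hx; have [HG _] := qk_regular_bounded K HK.
apply: (is_derive_fsum (fun k y => Qk M k y) (fun k y => qk M k y)) => i H1 H2.
apply: (proj2 (Qk_regular K HG i _ _)) => //; lia.
Qed.

Lemma Rabs_b_partial_derive_le K x : (1 <= K)%N -> a < x ->
  Rabs (fsum (fun k => qk M k x) 1 K) <= Rabs (M x) + (Rabs (Iinf M x) + 4 * psi M x) ^ 2.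
Proof.
move=> HK Hx.
rewrite (_ : K = (K - 1).+1); last lia.
rewrite fsumS qk1.
apply: Rle_trans (Rabs_triang _ _) _; apply: Rplus_le_compat_l.
case: (ltnP 1 K) => H.
  2: by rewrite (_ : (K - 1 = 0)%N); [rewrite fsum0 Rabs_R0; apply: pow2_ge_0|lia].
have [HG HB] := qk_regular_bounded (K - 1) ltac:(lia).
apply: Rle_trans (Rabs_fsum_le _ _ _) _.
apply: Rle_trans (weighted_qk_sum_le (K - 1) ltac:(lia) HG HB x Hx).
apply: fsum_le => i H1 H2.
have : 1 <= 2 ^ (i - 2) by apply: pow_R1_Rle; lra.
have := Rabs_pos (qk M i x); nra.
Qed.

Lemma b_partial_split K z : (1 <= K)%N ->
  b_partial M K z = - Iinf M z + fsum (fun k => Qk M k z) 2 (K - 1).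
Proof. by move=> HK; rewrite /b_partial {1}(_ : K = (K - 1).+1); [rewrite fsumS Qk1|lia]. Qed.

Lemma Rabs_b_sub_b_partial K z : (1 <= K)%N -> a < z ->
  Rabs (bfun M z - b_partial M K z) <= 8 * psi M z * (1 / 2) ^ K.
Proof.
move=> HK Hz.
have Hab : forall i, (K - 1 < i)%N -> Rabs (Qk M i.+1 z) <= 4 * psi M z * (1 / 2) ^ i.
  move=> i Hi.
  have H := Qk_le_psi i.+1 z ltac:(lia) Hz.
  rewrite (_ : (i.+1 - 2 = i - 1)%N) in H; last lia.
  have E : 2 ^ (i - 1) * (1 / 2) ^ i = 1 / 2.
    rewrite (_ : i = (i - 1).+1) /=; last lia.
    rewrite (_ : ((i - 1).+1 - 1 = i - 1)%N); last lia.
    by rewrite Rmult_comm Rmult_assoc -Rpow_mult_distr (_ : 1 / 2 * 2 = 1) ?pow1; [ring|field].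
  have : 0 < (1 / 2) ^ i by apply: pow_lt; lra.
  have : 0 <= Rabs (Qk M i.+1 z) by apply: Rabs_pos.
  nra.
have G := Rabs_Series_sub_sum_n (fun i => Qk M i.+1 z) _ (K - 1) Hab.
rewrite (sum_n_fsum (fun k => Qk M k z)) (_ : (K - 1).+1 = K) in G; last lia.
apply: Rle_trans G _; apply: Req_le.
rewrite {2}(_ : K = (K - 1).+1) /=; [field|lia].
Qed.

End QkBounds.

(** * Energy of the solutions *)

Lemma filterdiff_fst (F : (R -> Prop) -> Prop) {FF : Filter F} (f : R -> C) (d : C) :
  filterdiff (K := R_AbsRing) (U := R_NormedModule) (V := C_R_NormedModule) f F (fun h => scal h d) ->
  filterdiff (K := R_AbsRing) (U := R_NormedModule) (V := R_NormedModule)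
    (fun t => fst (f t)) F (fun h => scal h (fst d)).
Proof.
move=> H.
have L : is_linear (K := R_AbsRing) (U := C_R_NormedModule) (V := R_NormedModule) (fun z : C => fst z).
  exact: (is_linear_fst (K := R_AbsRing) (U := R_NormedModule) (V := R_NormedModule)).
exact: (filterdiff_ext_lin _ _ _ (filterdiff_comp f _ _ _ H (filterdiff_linear _ L))).
Qed.

Lemma filterdiff_snd (F : (R -> Prop) -> Prop) {FF : Filter F} (f : R -> C) (d : C) :
  filterdiff (K := R_AbsRing) (U := R_NormedModule) (V := C_R_NormedModule) f F (fun h => scal h d) ->
  filterdiff (K := R_AbsRing) (U := R_NormedModule) (V := R_NormedModule)
    (fun t => snd (f t)) F (fun h => scal h (snd d)).
Proof.
move=> H.
have L : is_linear (K := R_AbsRing) (U := C_R_NormedModule) (V := R_NormedModule) (fun z : C => snd z).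
  exact: (is_linear_snd (K := R_AbsRing) (U := R_NormedModule) (V := R_NormedModule)).
exact: (filterdiff_ext_lin _ _ _ (filterdiff_comp f _ _ _ H (filterdiff_linear _ L))).
Qed.

Lemma filterlim_of_filterdiff_within (D : R -> Prop) (tau : R) (g : R -> R) (d : R) :
  filterdiff (K := R_AbsRing) (U := R_NormedModule) (V := R_NormedModule)
    g (within D (locally tau)) (fun h => scal h d) ->
  filterlim g (within D (locally tau)) (locally (g tau)).
Proof.
move=> [_ H].
have Hl : is_filter_lim (within D (locally tau)) tau.
  by move=> P HP; apply: filter_imp HP => x Hx _.
have H1 := H tau Hl (mkposreal 1 Rlt_0_1).
apply/filterlim_locally => eps.
have Hd : 0 < eps / (1 + Rabs d).
  apply: Rdiv_lt_0_compat; [exact: cond_pos|have := Rabs_pos d; lra].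
have H2 : within D (locally tau) (fun y => Rabs (y - tau) < eps / (1 + Rabs d)).
  by exists (mkposreal _ Hd) => y /ball_RE Hy _.
apply: filter_imp (filter_and _ _ H1 H2) => y [Hy1 Hy2]; apply/ball_RE.
move: Hy1; rewrite /norm /= /abs /minus /plus /opp /scal /= /mult /= => Hy1.
have -> : g y - g tau = (g y + - g tau + - ((y + - tau) * d)) + (y - tau) * d by ring.
apply: Rle_lt_trans (Rabs_triang _ _) _; rewrite Rabs_mult.
have : Rabs (y - tau) * (1 + Rabs d) < eps.
  have := Rmult_lt_compat_r (1 + Rabs d) _ _ ltac:(have := Rabs_pos d; lra) Hy2.
  by rewrite /Rdiv Rmult_assoc Rinv_l ?Rmult_1_r //; have := Rabs_pos d; lra.
have : Rabs (y + - tau) = Rabs (y - tau) by [].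
have := Rabs_pos (y - tau); have := Rabs_pos d; nra.
Qed.

Definition re_u (W : R -> C * C) (t : R) : R := fst (fst (W t)).
Definition im_u (W : R -> C * C) (t : R) : R := snd (fst (W t)).
Definition re_v (W : R -> C * C) (t : R) : R := fst (snd (W t)).
Definition im_v (W : R -> C * C) (t : R) : R := snd (snd (W t)).

Definition u_sq (W : R -> C * C) (t : R) : R := re_u W t ^ 2 + im_u W t ^ 2.
Definition v_sq (W : R -> C * C) (t : R) : R := re_v W t ^ 2 + im_v W t ^ 2.
Definition energy (W : R -> C * C) (t : R) : R := u_sq W t + v_sq W t.

Definition im_cross (W : R -> C * C) (t : R) : R := im_u W t * re_v W t - re_u W t * im_v W t.

Lemma energy_ge0 W t : 0 <= energy W t.
Proof. rewrite /energy /u_sq /v_sq; nra. Qed.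

Lemma C2norm_energy (W : R -> C * C) t : C2norm (W t) = sqrt (energy W t).
Proof.
rewrite /C2norm /Cmod !pow2_sqrt; first by [].
- by have := pow2_ge_0 (fst (snd (W t))); have := pow2_ge_0 (snd (snd (W t))); lra.
- by have := pow2_ge_0 (fst (fst (W t))); have := pow2_ge_0 (snd (fst (W t))); lra.
Qed.

Lemma Rabs_im_cross_le W t : Rabs (im_cross W t) <= energy W t / 2.
Proof.
rewrite /im_cross /energy /u_sq /v_sq; apply: Rabs_le; split.
  have := pow2_ge_0 (im_u W t + re_v W t); have := pow2_ge_0 (re_u W t - im_v W t); lra.
have := pow2_ge_0 (im_u W t - re_v W t); have := pow2_ge_0 (re_u W t + im_v W t); lra.
Qed.

Lemma modified_energy_bounds (E IP bk r : R) : 0 < r -> Rabs IP <= E / 2 -> 2 * Rabs bk <= r ->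
  E / 2 <= E - 2 * bk * IP / r <= 3 * E / 2.
Proof.
move=> Hr HIP Hbk.
have : Rabs (2 * bk * IP / r) <= E / 2.
  rewrite /Rdiv (Rabs_mult (2 * bk * IP)) (Rabs_mult (2 * bk)) (Rabs_mult 2 bk) Rabs_inv.
  rewrite (Rabs_pos_eq 2) ?(Rabs_pos_eq r); try lra.
  have : 2 * Rabs bk * / r <= 1.
    by apply: (Rmult_le_reg_r r) => //; rewrite Rmult_assoc Rinv_l; lra.
  have := Rabs_pos IP; have : 0 <= 2 * Rabs bk * / r.
    by have := Rabs_pos bk; have := Rinv_0_lt_compat r Hr; nra.
  nra.
move/Rabs_le_between; lra.
Qed.

Lemma flow_error_le (e beta delta X E IP eps gg : R) :
  Rabs e <= eps -> Rabs beta <= 1 / 2 -> Rabs delta <= gg -> 0 <= X <= E -> Rabs IP <= E / 2 ->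
  Rabs (4 * e * beta * IP - 4 * e * X - 2 * delta * IP) <= (5 * eps + gg) * E.
Proof.
move=> He Hb Hd HX HIP.
have := Rabs_pos e; have := Rabs_pos beta; have := Rabs_pos delta; have := Rabs_pos IP.
move=> P1 P2 P3 P4.
have T1 : Rabs (4 * e * X) <= 4 * eps * E.
  rewrite (Rabs_mult (4 * e)) (Rabs_mult 4 e) (Rabs_pos_eq 4) ?(Rabs_pos_eq X); try lra.
  have : Rabs e * X <= eps * E by apply: Rmult_le_compat; lra.
  lra.
have T2 : Rabs (4 * e * beta * IP) <= eps * E.
  rewrite (Rabs_mult (4 * e * beta)) (Rabs_mult (4 * e)) (Rabs_mult 4 e) (Rabs_pos_eq 4); last lra.
  have Heb : Rabs e * Rabs beta <= eps * (1 / 2) by apply: Rmult_le_compat.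
  have : Rabs e * Rabs beta * Rabs IP <= eps * (1 / 2) * (E / 2).
    by apply: Rmult_le_compat => //; apply: Rmult_le_pos.
  lra.
have T3 : Rabs (2 * delta * IP) <= gg * E.
  rewrite (Rabs_mult (2 * delta)) (Rabs_mult 2 delta) (Rabs_pos_eq 2); last lra.
  have : Rabs delta * Rabs IP <= gg * (E / 2) by apply: Rmult_le_compat.
  lra.
move: T1 T2 T3 => /Rabs_le_between T1 /Rabs_le_between T2 /Rabs_le_between T3.
apply: Rabs_le; lra.
Qed.

(* Pointwise form: [X = |u|^2], [Y = |v|^2], [IP = Im (u conj v)], [bk] approximates [b],
   [q1] is the drift, and [dV] is the derivative of [V] along the flow. *)
Lemma modified_energy_derive_bounds (X Y IP b bk dbk q1 r ps gg eps : R) :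
  0 < r -> 0 <= X -> 0 <= Y -> Rabs IP <= (X + Y) / 2 ->
  Rabs (b - bk) <= eps -> 2 * Rabs bk <= r -> Rabs (bk - q1) <= 2 * ps -> Rabs dbk <= r * gg ->
  let V := X + Y - 2 * bk * IP / r in
  let dV := -4 * b * X - 2 * (dbk * IP + bk * (-2 * b * IP + r * (Y - X))) / r in
  let h := 4 * ps + 10 * eps + 2 * gg in
  dV + V * (2 * q1 - h) <= 0 /\ 0 <= dV + V * (2 * q1 + h).
Proof.
move=> Hr HX HY HIP He Hbk Hq Hd V dV h.
set err := 4 * (b - bk) * (bk / r) * IP - 4 * (b - bk) * X - 2 * (dbk / r) * IP.
have ID : forall c, dV + V * c = V * (c - 2 * bk) + err.
  by move=> c; rewrite /dV /V /err; field; lra.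
have Herr : Rabs err <= (5 * eps + gg) * (X + Y).
  apply: flow_error_le => //; try lra.
  - rewrite /Rdiv Rabs_mult Rabs_inv (Rabs_pos_eq r); last lra.
    by apply: (Rmult_le_reg_r r) => //; rewrite Rmult_assoc Rinv_l; lra.
  - rewrite /Rdiv Rabs_mult Rabs_inv (Rabs_pos_eq r); last lra.
    by apply: (Rmult_le_reg_r r) => //; rewrite Rmult_assoc Rinv_l; lra.
have HV : (X + Y) / 2 <= V by exact: (proj1 (modified_energy_bounds (X + Y) IP bk r Hr HIP Hbk)).
move: Herr Hq => /Rabs_le_between Herr /Rabs_le_between Hq.
have Hgg : 0 <= gg by have := Rabs_pos dbk; nra.
have Heps : 0 <= eps by have := Rabs_pos (b - bk); lra.
rewrite !ID; split.
- have : V * (2 * q1 - h - 2 * bk) <= V * (- 10 * eps - 2 * gg).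
    by apply: Rmult_le_compat_l; rewrite /h; lra.
  have : 0 <= (V - (X + Y) / 2) * (10 * eps + 2 * gg) by apply: Rmult_le_pos; lra.
  lra.
- have : V * (10 * eps + 2 * gg) <= V * (2 * q1 + h - 2 * bk).
    by apply: Rmult_le_compat_l; rewrite /h; lra.
  have : 0 <= (V - (X + Y) / 2) * (10 * eps + 2 * gg) by apply: Rmult_le_pos; lra.
  lra.
Qed.

Section Flow.
Variables (T r : R) (W : R -> C * C) (b : R -> R).
Hypothesis Hsol : solves_W b r T W.

Lemma components_derive tau : T < tau ->
  is_derive (re_u W) tau (-2 * b tau * re_u W tau - r * im_v W tau) /\
  is_derive (im_u W) tau (-2 * b tau * im_u W tau + r * re_v W tau) /\
  is_derive (re_v W) tau (- r * im_u W tau) /\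
  is_derive (im_v W) tau (r * re_u W tau).
Proof.
move=> Ht; case: Hsol => H1 H2.
have F1 := H1 tau (Rlt_le _ _ Ht); have F2 := H2 tau (Rlt_le _ _ Ht).
rewrite within_le_locally // in F1 F2.
split; [|split; [|split]]; apply: is_derive_eq.
- exact: (filterdiff_fst _ _ _ F1).
- by rewrite /re_u /im_v /=; ring.
- exact: (filterdiff_snd _ _ _ F1).
- by rewrite /im_u /re_v /=; ring.
- exact: (filterdiff_fst _ _ _ F2).
- by rewrite /im_u /=; ring.
- exact: (filterdiff_snd _ _ _ F2).
- by rewrite /re_u /=; ring.
Qed.

Lemma energy_derive tau : T < tau -> is_derive (energy W) tau (-4 * b tau * u_sq W tau).
Proof.
move=> Ht; have [D1 [D2 [D3 D4]]] := components_derive tau Ht.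
apply: is_derive_eq.
  by apply: is_derive_Rplus; apply: is_derive_Rplus; apply: is_derive_Rsqr; eassumption.
by rewrite /u_sq /=; ring.
Qed.

Lemma im_cross_derive tau : T < tau ->
  is_derive (im_cross W) tau (-2 * b tau * im_cross W tau + r * (v_sq W tau - u_sq W tau)).
Proof.
move=> Ht; have [D1 [D2 [D3 D4]]] := components_derive tau Ht.
apply: is_derive_eq; first by apply: is_derive_Rminus; apply: is_derive_Rmult; eassumption.
by rewrite /im_cross /u_sq /v_sq /=; ring.
Qed.

Lemma energy_cont_within tau : T <= tau ->
  filterlim (energy W) (within (fun x => T <= x) (locally tau)) (locally (energy W tau)).
Proof.
move=> Ht; case: Hsol => H1 H2.
have F1 := H1 tau Ht; have F2 := H2 tau Ht.
have FW := within_locally_Filter (fun x => T <= x) tau.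
have C1 := filterlim_of_filterdiff_within _ _ _ _ (filterdiff_fst _ (FF := FW) _ _ F1).
have C2 := filterlim_of_filterdiff_within _ _ _ _ (filterdiff_snd _ (FF := FW) _ _ F1).
have C3 := filterlim_of_filterdiff_within _ _ _ _ (filterdiff_fst _ (FF := FW) _ _ F2).
have C4 := filterlim_of_filterdiff_within _ _ _ _ (filterdiff_snd _ (FF := FW) _ _ F2).
have Sq : forall f : R -> R, filterlim f (within (fun x => T <= x) (locally tau)) (locally (f tau)) ->
    filterlim (fun x => f x ^ 2) (within (fun x => T <= x) (locally tau)) (locally (f tau ^ 2)).
  move=> f Hf; apply: (filterlim_ext (fun x => f x * f x)); first by move=> x /=; ring.
  by rewrite /= Rmult_1_r; apply: filterlim_Rmult.
rewrite /energy /u_sq /v_sq.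
by apply: filterlim_Rplus; apply: filterlim_Rplus; apply: Sq.
Qed.

Section ModifiedEnergy.
Hypothesis Hr : 0 < r.
Variables (s t : R) (bk dbk q1 A ps gg H : R -> R) (eps : R).
Hypotheses (Hs : T < s) (Hst : s <= t).
Hypothesis Hbk : forall z, s <= z <= t -> is_derive bk z (dbk z).
Hypothesis HA : forall z, s <= z <= t -> is_derive A z (- q1 z).
Hypothesis HH : forall z, s <= z <= t -> is_derive H z (4 * ps z + 10 * eps + 2 * gg z).
Hypothesis Happrox : forall z, s <= z <= t -> Rabs (b z - bk z) <= eps.
Hypothesis Hsmall : forall z, s <= z <= t -> 2 * Rabs (bk z) <= r.
Hypothesis Hdrift : forall z, s <= z <= t -> Rabs (bk z - q1 z) <= 2 * ps z.
Hypothesis Hslow : forall z, s <= z <= t -> Rabs (dbk z) <= r * gg z.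

Let V z := energy W z - 2 * bk z * im_cross W z / r.
Let dV z := -4 * b z * u_sq W z - 2 * (dbk z * im_cross W z + bk z *
  (-2 * b z * im_cross W z + r * (v_sq W z - u_sq W z))) / r.
Let h z := 4 * ps z + 10 * eps + 2 * gg z.

Let V_derive z : s <= z <= t -> is_derive V z (dV z).
Proof.
move=> Hz; apply: (is_derive_ext (fun y => energy W y - 2 / r * (bk y * im_cross W y))).
  by move=> y /=; rewrite /V; field; lra.
apply: is_derive_eq.
  apply: is_derive_Rminus; first by apply: energy_derive; lra.
  apply: is_derive_Rscal; apply: is_derive_Rmult; first exact: Hbk.
  apply: im_cross_derive; lra.
by rewrite /dV; field; lra.
Qed.

Let V_bounds z : s <= z <= t -> energy W z / 2 <= V z <= 3 * energy W z / 2.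
Proof.
move=> Hz; apply: modified_energy_bounds => //; [exact: Rabs_im_cross_le|exact: Hsmall].
Qed.

Let V_drift z : s <= z <= t ->
  dV z + V z * (2 * q1 z - h z) <= 0 /\ 0 <= dV z + V z * (2 * q1 z + h z).
Proof.
move=> Hz.
exact: (modified_energy_derive_bounds (u_sq W z) (v_sq W z) (im_cross W z) (b z) (bk z) (dbk z)
  (q1 z) r (ps z) (gg z) eps Hr ltac:(rewrite /u_sq; nra) ltac:(rewrite /v_sq; nra)
  (Rabs_im_cross_le W z) (Happrox z Hz) (Hsmall z Hz) (Hdrift z Hz) (Hslow z Hz)).
Qed.

Lemma energy_comparable :
  energy W t <= 3 * energy W s * exp (2 * (A t - A s) + (H t - H s)) /\
  energy W s <= 3 * energy W t * exp (2 * (A s - A t) + (H t - H s)).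
Proof.
have HG1 : forall z, s <= z <= t -> is_derive (fun y => -2 * A y - H y) z (2 * q1 z - h z).
  move=> z Hz; apply: is_derive_eq.
    by apply: is_derive_Rminus; [apply: is_derive_Rscal; exact: HA|exact: HH].
  by rewrite /h; ring.
have HG2 : forall z, s <= z <= t -> is_derive (fun y => -2 * A y + H y) z (2 * q1 z + h z).
  move=> z Hz; apply: is_derive_eq.
    by apply: is_derive_Rplus; [apply: is_derive_Rscal; exact: HA|exact: HH].
  by rewrite /h; ring.
have up := gronwall_exp V dV _ _ s t Hst V_derive HG1 (fun z Hz => proj1 (V_drift z Hz)).
have lo := gronwall_exp (fun z => - V z) (fun z => - dV z) _ _ s t Hst
  (fun z Hz => is_derive_Ropp _ _ _ (V_derive z Hz)) HG2
  (fun z Hz => ltac:(have := proj2 (V_drift z Hz); lra)).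
set X := 2 * (A s - A t) + (H t - H s).
rewrite (_ : -2 * A s + H s - (-2 * A t + H t) = - X) ?exp_Ropp in lo; last by rewrite /X; ring.
have lo' : V s <= V t * exp X.
  apply: (Rmult_le_reg_r (/ exp X)); first by apply: Rinv_0_lt_compat; apply: exp_pos.
  rewrite Rmult_assoc Rinv_r ?Rmult_1_r; [lra|have := exp_pos X; lra].
rewrite (_ : -2 * A s - H s - (-2 * A t - H t) = 2 * (A t - A s) + (H t - H s)) in up; last ring.
have [Vs1 Vs2] := V_bounds s ltac:(lra); have [Vt1 Vt2] := V_bounds t ltac:(lra).
have := Rmult_le_compat_r _ _ _ (Rlt_le _ _ (exp_pos (2 * (A t - A s) + (H t - H s)))) Vs2.
have := Rmult_le_compat_r _ _ _ (Rlt_le _ _ (exp_pos X)) Vt2.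
move=> H1 H2; split; lra.
Qed.

End ModifiedEnergy.

End Flow.

(** * Estimates in the hyperbolic zone *)

Lemma le_of_le_mul_exp_geom x y c :
  (forall K, (1 <= K)%N -> x <= y * exp (c * (1 / 2) ^ K)) -> x <= y.
Proof.
move=> H.
have L : filterlim (fun K => y * exp (c * (1 / 2) ^ K)) eventually (locally (y * exp (c * 0))).
  apply: filterlim_Rscal; apply: (filterlim_comp _ _ _ _ exp _ (locally (c * 0))).
    by apply: filterlim_Rscal; apply: is_lim_seq_geom; rewrite Rabs_pos_eq; lra.
  by apply: ex_derive_continuous; exists (exp (c * 0)); apply: is_derive_exp.
rewrite Rmult_0_r exp_0 Rmult_1_r in L.
apply: (filterlim_Rle (fun _ => x) _ _ _ _ (filterlim_const _) L).
by exists 1%nat => K /leP HK; apply: H.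
Qed.

Lemma le_at_right_endpoint (f g : R -> R) T s t : T <= s < t ->
  filterlim f (within (fun x => T <= x) (locally s)) (locally (f s)) ->
  filterlim g (within (fun x => T <= x) (locally s)) (locally (g s)) ->
  (forall s', s < s' < t -> f s' <= g s') -> f s <= g s.
Proof.
move=> [H1 H2] Hf Hg Hb.
have Rlim : forall h : R -> R, filterlim h (within (fun x => T <= x) (locally s)) (locally (h s)) ->
    filterlim h (at_right s) (locally (h s)).
  move=> h Hh P /Hh HP; have HP' : locally s (fun x => T <= x -> P (h x)) := HP.
  by rewrite /filtermap /at_right /within; apply: filter_imp HP' => x Hx Hsx; apply: Hx; lra.
have PF : ProperFilter' (at_right s) := Proper_StrongProper _ (at_right_proper_filter s).
apply: (filterlim_Rle f g _ _ _ (Rlim f Hf) (Rlim g Hg)).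
by apply: filter_imp (locally_lt t s H2) => y Hy Hsy; apply: Hb; lra.
Qed.

Lemma Rpower_gt0 x y : 0 < Rpower x y.
Proof. exact: exp_pos. Qed.

Lemma Rpower_le_base_nonpos x1 x2 y : y <= 0 -> 0 < x1 <= x2 -> Rpower x2 y <= Rpower x1 y.
Proof.
move=> Hy [H1 H2]; rewrite /Rpower.
have := ln_le _ _ H1 H2; move=> Hln.
case: (Req_dec (y * ln x2) (y * ln x1)) => [->|Hne]; first lra.
by apply: Rlt_le; apply: exp_increasing; nra.
Qed.

Definition power_primitive (c p z : R) : R := c * (Rpower (1 + z) (p + 1) / (p + 1)).

Lemma is_derive_power_primitive c p z : 0 < 1 + z -> p + 1 <> 0 ->
  is_derive (power_primitive c p) z (c * Rpower (1 + z) p).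
Proof.
move=> Hz Hp.
have H1 : is_derive (fun x => Rpower x (p + 1)) (1 + z) ((p + 1) * Rpower (1 + z) (p + 1 - 1)).
  by apply/is_derive_Reals; exact: derivable_pt_lim_power.
have H2 : is_derive (fun y => 1 + y) z 1.
  by auto_derive => //; ring.
apply: (is_derive_ext (fun y => c / (p + 1) * Rpower (1 + y) (p + 1))).
  by move=> y /=; rewrite /power_primitive /Rdiv; ring.
apply: is_derive_eq; first exact: is_derive_Rscal (is_derive_comp _ _ z _ _ H1 H2) (c / (p + 1)).
by rewrite /scal /= /mult /= (_ : p + 1 - 1 = p); [field|ring].
Qed.

Section ZoneEnergy.
Variable M : R -> R.
Hypothesis HM : tails_integrable M.
Variables a T : R.
Hypotheses (Ha : 0 < a) (HaT : a < T) (HPhi : Phi M a <= 2 / 1296).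
Hypothesis HA1 : forall t, T <= t -> Rabs (Iinf (Qk M 1) t) <= 1.
Variables (r : R) (W : R -> C * C).
Hypotheses (Hr : 0 < r) (Hsol : solves_W (bfun M) r T W).
Variables (s t Cb p Bz : R).
Hypotheses (Hs : T <= s) (Hst : s < t) (Hp1 : p + 1 <> 0).
Hypothesis Hsmall : forall z, s < z <= t -> 2 * (Rabs (Iinf M z) + 2 * psi M z) <= r.
Hypothesis Hslow : forall z, s < z <= t ->
  Rabs (M z) + (Rabs (Iinf M z) + 4 * psi M z) ^ 2 <= Cb * Rpower (1 + z) p.
Hypothesis Hint : forall s', s < s' < t ->
  power_primitive (Cb / r) p t - power_primitive (Cb / r) p s' <= Bz.

Let eps (K : nat) := 8 * psi M T * (1 / 2) ^ K.
Let H (K : nat) z := -4 * Phi M z + 10 * eps K * z + 2 * power_primitive (Cb / r) p z.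

Let energy_comparable_partial K s' : (1 <= K)%N -> s < s' < t ->
  energy W t <= 3 * energy W s' * exp (2 * (Iinf (Qk M 1) t - Iinf (Qk M 1) s') + (H K t - H K s')) /\
  energy W s' <= 3 * energy W t * exp (2 * (Iinf (Qk M 1) s' - Iinf (Qk M 1) t) + (H K t - H K s')).
Proof.
move=> HK Hs'.
have Hz : forall z, s' <= z <= t -> a < z /\ s < z <= t by move=> z Hz; lra.
apply: (energy_comparable T r W (bfun M) Hsol Hr s' t (b_partial M K)
  (fun z => fsum (fun k => qk M k z) 1 K) (Qk M 1) (Iinf (Qk M 1)) (psi M)
  (fun z => Cb / r * Rpower (1 + z) p) (H K) (eps K)); try lra.
- by move=> z /Hz [Hza _]; apply: (is_derive_b_partial M HM a).
- move=> z /Hz [Hza _]; apply: is_derive_eq; first by apply: (Iinf_Q1_derive M HM); lra.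
  by rewrite Qk1 Ropp_involutive.
- move=> z /Hz [Hza _]; apply: is_derive_eq.
    apply: is_derive_Rplus; first apply: is_derive_Rplus; apply: is_derive_Rscal.
    + by apply: (Phi_derive M HM); lra.
    + exact: is_derive_id.
    + by apply: is_derive_power_primitive; lra.
  by rewrite /one /=; ring.
- move=> z /Hz [Hza Hz'].
  apply: Rle_trans (Rabs_b_sub_b_partial M HM a Ha HPhi K z HK Hza) _.
  have := psi_nonincreasing M HM T z ltac:(lra) ltac:(lra).
  have : 0 < (1 / 2) ^ K by apply: pow_lt; lra.
  rewrite /eps; nra.
- move=> z /Hz [Hza Hz']; rewrite b_partial_split //.
  have := Rabs_fsum_Qk_le M HM a Ha HPhi (K - 1) z Hza.
  have := Rabs_triang (- Iinf M z) (fsum (fun k => Qk M k z) 2 (K - 1)).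
  rewrite Rabs_Ropp; have := Hsmall z Hz'; lra.
- move=> z /Hz [Hza _]; rewrite b_partial_split // Qk1.
  rewrite (_ : forall x y, x + y - x = y); last by move=> x y; ring.
  exact: (Rabs_fsum_Qk_le M HM a Ha HPhi (K - 1) z Hza).
- move=> z /Hz [Hza Hz'].
  have := Rabs_b_partial_derive_le M HM a Ha HPhi K z HK Hza; have := Hslow z Hz'.
  rewrite (_ : r * (Cb / r * Rpower (1 + z) p) = Cb * Rpower (1 + z) p); [lra|field; lra].
Qed.

Let exponent_le K s' x : (1 <= K)%N -> s < s' < t -> Rabs x <= 4 ->
  exp (x + (H K t - H K s')) <= exp (5 + 2 * Bz) * exp (80 * psi M T * (t - s) * (1 / 2) ^ K).
Proof.
move=> HK Hs' /Rabs_le_between Hx.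
rewrite -exp_plus; apply: exp_le.
have := Phi_ge0 M HM t ltac:(lra); have := Phi_nonincreasing M HM a s' Ha ltac:(lra).
have := Hint s' Hs'; have P := psi_ge0 M HM T ltac:(lra).
have : 0 <= psi M T * (1 / 2) ^ K * (s' - s).
  by apply: Rmult_le_pos; [apply: Rmult_le_pos => //; apply: pow_le|]; lra.
rewrite /H /eps; lra.
Qed.

Lemma energy_comparable_zone :
  energy W t <= 3 * exp (5 + 2 * Bz) * energy W s /\ energy W s <= 3 * exp (5 + 2 * Bz) * energy W t.
Proof.
set c := 80 * psi M T * (t - s).
have HA : forall s', s < s' < t -> Rabs (2 * (Iinf (Qk M 1) t - Iinf (Qk M 1) s')) <= 4 /\
    Rabs (2 * (Iinf (Qk M 1) s' - Iinf (Qk M 1) t)) <= 4.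
  move=> s' Hs'.
  move: (HA1 t ltac:(lra)) (HA1 s' ltac:(lra)) => /Rabs_le_between H1 /Rabs_le_between H2.
  by split; apply: Rabs_le; lra.
have Cs := energy_cont_within T r W (bfun M) Hsol s Hs.
have E0 := energy_ge0 W.
split.
- apply: (le_at_right_endpoint (fun _ => energy W t)
    (fun z => 3 * exp (5 + 2 * Bz) * energy W z) T s t)
    => //; [exact: filterlim_const|exact: filterlim_Rscal|] => s' Hs'.
  apply: (le_of_le_mul_exp_geom _ _ c) => K HK.
  have [M1 _] := energy_comparable_partial K s' HK Hs'.
  apply: Rle_trans M1 _.
  have := Rmult_le_compat_l _ _ _ (E0 s') (exponent_le K s' _ HK Hs' (proj1 (HA s' Hs'))).
  have := exp_pos (c * (1 / 2) ^ K); rewrite /c; nra.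
- apply: (le_at_right_endpoint (energy W) (fun _ => 3 * exp (5 + 2 * Bz) * energy W t) T s t)
    => //; [exact: filterlim_const|] => s' Hs'.
  apply: (le_of_le_mul_exp_geom _ _ c) => K HK.
  have [_ M2] := energy_comparable_partial K s' HK Hs'.
  apply: Rle_trans M2 _.
  have := Rmult_le_compat_l _ _ _ (E0 t) (exponent_le K s' _ HK Hs' (proj2 (HA s' Hs'))).
  have := exp_pos (c * (1 / 2) ^ K); rewrite /c; nra.
Qed.

End ZoneEnergy.

Lemma Rpower_opp_mul_le (N r x alpha : R) :
  0 < x -> N <= Rpower x alpha * r -> Rpower x (- alpha) * N <= r.
Proof.
move=> Hx H; rewrite Rpower_Ropp.
apply: (Rmult_le_reg_l (Rpower x alpha)); first exact: Rpower_gt0.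
by rewrite -Rmult_assoc Rinv_r; [lra|have := Rpower_gt0 x alpha; lra].
Qed.

Lemma power_primitive_increment_le (C r N p alpha s t : R) :
  0 <= C -> 0 < r -> 0 < N -> 0 <= s <= t -> p + 1 <> 0 ->
  (forall z, s <= z <= t -> Rpower (1 + z) (- alpha) * N <= r) ->
  (p + 1 < 0 -> p + 1 <= - alpha) -> (0 < p + 1 -> p + 1 = - alpha) ->
  power_primitive (C / r) p t - power_primitive (C / r) p s <= C / (N * Rabs (p + 1)).
Proof.
move=> HC Hr HN Hst Hp1 Hz Hneg Hpos.
have Hq := Rabs_pos_lt _ Hp1.
have HCr : 0 <= C / r by apply: Rdiv_le_0_compat; lra.
have key : forall u, s <= u <= t -> Rpower (1 + u) (p + 1) <= Rpower (1 + u) (- alpha) ->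
    C / r * (Rpower (1 + u) (p + 1) / Rabs (p + 1)) <= C / (N * Rabs (p + 1)).
  move=> u Hu Hle.
  have HX : Rpower (1 + u) (p + 1) * N <= r.
    by apply: Rle_trans (Hz u Hu); apply: Rmult_le_compat_r; lra.
  rewrite (_ : C / (N * Rabs (p + 1)) = C / r * (r / N / Rabs (p + 1))); last by field; lra.
  apply: Rmult_le_compat_l => //; apply: Rmult_le_compat_r.
    by apply: Rlt_le; apply: Rinv_0_lt_compat.
  by apply: (Rmult_le_reg_r N) => //; rewrite /Rdiv Rmult_assoc Rinv_l; lra.
have Ps := Rpower_gt0 (1 + s) (p + 1); have Pt := Rpower_gt0 (1 + t) (p + 1).
rewrite /power_primitive; case: (Rlt_or_le (p + 1) 0) => Hsgn.
- have : / (p + 1) < 0 by apply: Rinv_lt_0_compat.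
  have := key s ltac:(lra) (Rle_Rpower (1 + s) _ _ ltac:(lra) (Hneg Hsgn)).
  rewrite Rabs_left // /Rdiv; move=> H1 H2.
  have : C / r * (Rpower (1 + t) (p + 1) * / (p + 1)) <= 0.
    by apply: Rmult_le_0_l => //; nra.
  rewrite (_ : / - (p + 1) = - / (p + 1)) in H1; [nra|field; lra].
- have Hp0 : 0 < p + 1 by lra.
  have := key t ltac:(lra) (Req_le _ _ (f_equal _ (Hpos Hp0))).
  rewrite Rabs_pos_eq; last lra.
  have : 0 <= C / r * (Rpower (1 + s) (p + 1) / (p + 1)).
    by apply: Rmult_le_pos => //; apply: Rdiv_le_0_compat; lra.
  lra.
Qed.

(* The factor 3 = (3/2) / (1/2) compares the modified energy with [|W|^2]; [exp 4] bounds
   [exp (2 |int_s^t Q_1|)], [exp 1] bounds [exp (4 Phi)], and the last factor bounds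
   [exp (2 int_s^t |b_K'| / |xi|)] in the hyperbolic zone. *)
Definition zone_constant (N Cb p : R) : R := 3 * exp (5 + 2 * (Cb / (N * Rabs (p + 1)))).

Lemma zone_constant_ge1 N Cb p : 0 < N -> 0 <= Cb -> p + 1 <> 0 -> 1 <= zone_constant N Cb p.
Proof.
move=> HN HCb Hp1; have : 0 <= Cb / (N * Rabs (p + 1)).
  by apply: Rdiv_le_0_compat => //; have := Rabs_pos_lt _ Hp1; nra.
by rewrite /zone_constant; have := exp_le 0 (5 + 2 * (Cb / (N * Rabs (p + 1)))); rewrite exp_0; lra.
Qed.

Section Zone.
Variable M : R -> R.
Hypothesis HM : tails_integrable M.
Variables a T : R.
Hypotheses (Ha : 0 < a) (HaT : a < T) (HPhi : Phi M a <= 2 / 1296).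
Hypothesis HA1 : forall t, T <= t -> Rabs (Iinf (Qk M 1) t) <= 1.
Variables (alpha gamma N Cb p : R).
Hypotheses (Hag : alpha <= gamma) (HN : 0 < N) (HCb : 0 <= Cb) (Hp1 : p + 1 <> 0).
Hypotheses (Hp_neg : p + 1 < 0 -> p + 1 <= - alpha) (Hp_pos : 0 < p + 1 -> p + 1 = - alpha).
Hypothesis Hdecay : forall z, 0 < z ->
  2 * (Rabs (Iinf M z) + 2 * psi M z) <= N * Rpower (1 + z) (- gamma).
Hypothesis Hslow : forall z, 0 < z ->
  Rabs (M z) + (Rabs (Iinf M z) + 4 * psi M z) ^ 2 <= Cb * Rpower (1 + z) p.

Lemma energy_comparable_in_zone r W : 0 < r -> solves_W (bfun M) r T W ->
  forall s t, T <= s -> s <= t -> (forall z, s <= z <= t -> N <= Rpower (1 + z) alpha * r) ->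
  energy W t <= zone_constant N Cb p * energy W s /\ energy W s <= zone_constant N Cb p * energy W t.
Proof.
move=> Hr Hsol s t Hs Hst Hz.
have HKc := zone_constant_ge1 N Cb p HN HCb Hp1.
case: (Rle_lt_or_eq_dec _ _ Hst) => Hst'; last first.
  by rewrite Hst'; have := energy_ge0 W t; split; nra.
have Zc : forall z, s <= z <= t -> Rpower (1 + z) (- alpha) * N <= r.
  by move=> z Hz'; apply: Rpower_opp_mul_le; [lra|exact: Hz].
apply: (energy_comparable_zone M HM a T Ha HaT HPhi HA1 r W Hr Hsol s t Cb p) => //.
- move=> z Hz'; apply: Rle_trans (Hdecay z ltac:(lra)) _.
  have := Zc z ltac:(lra); have := Rle_Rpower (1 + z) (- gamma) (- alpha) ltac:(lra) ltac:(lra).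
  nra.
- move=> z Hz'; apply: Hslow; lra.
- move=> s' Hs'; apply: (power_primitive_increment_le Cb r N p alpha) => //; first lra.
  by move=> z Hz'; apply: Zc; lra.
Qed.

End Zone.

Lemma t_xi_zone (T N alpha r t : R) : 0 < alpha -> 0 < r -> 0 < N -> 0 <= T -> T <= t ->
  N <= Rpower (1 + t) alpha * r ->
  T <= t_xi T N alpha r /\ t_xi T N alpha r <= t /\
  forall z, t_xi T N alpha r <= z <= t -> N <= Rpower (1 + z) alpha * r.
Proof.
move=> Ha Hr HN HT Ht Hz.
set q := Rpower (N / r) (/ alpha).
have Hnr : 0 < N / r by apply: Rdiv_lt_0_compat.
have Hq : 0 < q by apply: Rpower_gt0.
have Hz' : N / r <= Rpower (1 + t) alpha.
  by apply: (Rmult_le_reg_r r) => //; rewrite /Rdiv Rmult_assoc Rinv_l; lra.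
have Hqt : q <= 1 + t.
  have := Rle_Rpower_l (N / r) (Rpower (1 + t) alpha) (/ alpha)
    ltac:(apply: Rlt_le; apply: Rinv_0_lt_compat; lra) (conj Hnr Hz').
  by rewrite Rpower_mult Rinv_r ?Rpower_1 /q; lra.
rewrite /t_xi -/q.
split; first exact: Rmax_l.
split; first by apply: Rmax_lub; lra.
move=> z [Hz1 Hz2].
have Hs : q <= 1 + z by have := Rmax_r T (q - 1); lra.
have := Rle_Rpower_l q (1 + z) alpha ltac:(lra) (conj Hq Hs).
rewrite /q Rpower_mult Rinv_l ?Rpower_1; try lra.
move=> H; apply: (Rle_trans _ (N / r * r)); first by rewrite /Rdiv Rmult_assoc Rinv_l; lra.
by apply: Rmult_le_compat_r; lra.
Qed.

Lemma zone_from_start (T N alpha r t : R) : alpha <= 0 -> 0 < r -> 0 <= T ->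
  N <= Rpower (1 + t) alpha * r -> forall z, T <= z <= t -> N <= Rpower (1 + z) alpha * r.
Proof.
move=> Ha Hr HT Hz z [Hz1 Hz2]; apply: Rle_trans Hz _.
by apply: Rmult_le_compat_r; [lra|apply: Rpower_le_base_nonpos; lra].
Qed.

Lemma big_Rplus_ge_term (I : eqType) (r : seq I) (F : I -> R) (i0 : I) :
  (forall i, 0 <= F i) -> i0 \in r -> F i0 <= \big[Rplus/0]_(i <- r) F i.
Proof.
move=> H; elim: r => [|x r IH] //.
have Hpos : 0 <= \big[Rplus/0]_(i <- r) F i by apply: big_ind => //; [lra|move=> ? ?; lra].
rewrite big_cons in_cons => /orP [/eqP ->|/IH]; have := H x; lra.
Qed.

Lemma vnorm_gt0 n (xi : 'I_n -> R) : xi <> (fun _ => 0) -> 0 < vnorm n xi.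
Proof.
move=> Hxi.
have [i Hi] : exists i, xi i <> 0.
  apply: not_all_not_ex => H; apply: Hxi.
  by apply: functional_extensionality => i; apply: NNPP.
apply: sqrt_lt_R0; apply: Rlt_le_trans (big_Rplus_ge_term _ _ (fun i => xi i * xi i) i _ _).
- by have := pow2_ge_0 (xi i); nra.
- by move=> j; nra.
- by rewrite mem_index_enum.
Qed.

Lemma C2norm_comparable (W : R -> C * C) K s t : 1 <= K ->
  energy W t <= K * energy W s -> energy W s <= K * energy W t ->
  / sqrt K * C2norm (W s) <= C2norm (W t) /\ C2norm (W t) <= sqrt K * C2norm (W s).
Proof.
move=> HK H1 H2; rewrite !C2norm_energy.
have := sqrt_pos (energy W s); have HsK : 0 < sqrt K by apply: sqrt_lt_R0; lra.
split.
- apply: (Rmult_le_reg_l (sqrt K)) => //.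
  rewrite -Rmult_assoc Rinv_r ?Rmult_1_l; last lra.
  by rewrite -sqrt_mult; [apply: sqrt_le_1_alt|lra|apply: energy_ge0].
- by rewrite -sqrt_mult; [apply: sqrt_le_1_alt|lra|apply: energy_ge0].
Qed.

(* The bounds on the Q_k hold on open half-lines (a, oo); taking a < T with Phi a still small
   makes them available on [T, oo). *)
Lemma exists_Phi_small_below (M : R -> R) T : tails_integrable M -> 0 < T ->
  Phi M T <= 1 / 1296 -> exists a, 0 < a /\ a < T /\ Phi M a <= 2 / 1296.
Proof.
move=> HM HT PT.
have /continuity_pt_filterlim /continuity_pt_locally C : continuous (Phi M) T.
  exact: Phi_cont.
have He : 0 < 1 / 1296 by lra.
have [d Hd] := C (mkposreal _ He).
have Hd0 := cond_pos d.
exists (Rmax (T / 2) (T - d / 2)); split; first by apply: Rlt_le_trans (Rmax_l _ _); lra.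
split; first by apply: Rmax_lub_lt; lra.
have Hball : ball T d (Rmax (T / 2) (T - d / 2)).
  by apply/ball_RE; rewrite /Rmax; case: Rle_dec => Hc; apply: Rabs_def1; lra.
by move: (Hd _ Hball) => /= /Rabs_def2; lra.
Qed.

Lemma exists_primitive_exponent (alpha beta : R) :
  (alpha <> 0 -> beta >= (alpha + 1) / 2) -> (alpha = 0 -> beta > 1 / 2) ->
  exists p, p + 1 <> 0 /\ - (2 * beta) <= p /\
    (p + 1 < 0 -> p + 1 <= - alpha) /\ (0 < p + 1 -> p + 1 = - alpha).
Proof.
move=> H1 H0; case: (Req_dec alpha 0) => Ha.
  have := H0 Ha; exists (- (2 * beta)); split; [lra|split; [lra|split; lra]].
have := H1 Ha; exists (-1 - alpha); split; [lra|split; [lra|split; lra]].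
Qed.

Section DecayConstants.
Variable M : R -> R.
Hypothesis HM : tails_integrable M.
Variables (beta gamma p : R).
Hypotheses (Hbg : beta <= gamma) (Hp : - (2 * beta) <= p).
Variables (CM CI CP : R).
Hypothesis HCM : forall t, 0 <= t -> Rabs (M t) <= CM * Rpower (1 + t) (- (2 * beta)).
Hypothesis HCI : forall t, 0 <= t -> Rabs (Iinf M t) <= CI * Rpower (1 + t) (- gamma).
Hypothesis HCP : forall t, 0 <= t -> psi M t <= CP * Rpower (1 + t) (- gamma).

Let C0 := Rabs CI + 4 * Rabs CP + 1.

Let tails_le z : 0 < z -> Rabs (Iinf M z) + 4 * psi M z <= C0 * Rpower (1 + z) (- gamma).
Proof.
move=> Hz; have := HCI z ltac:(lra); have := HCP z ltac:(lra).
have := Rpower_gt0 (1 + z) (- gamma); have := Rle_abs CI; have := Rle_abs CP.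
rewrite /C0; nra.
Qed.

Lemma decay_constants : exists N Cb, 0 < N /\ 0 <= Cb /\
  (forall z, 0 < z -> 2 * (Rabs (Iinf M z) + 2 * psi M z) <= N * Rpower (1 + z) (- gamma)) /\
  (forall z, 0 < z -> Rabs (M z) + (Rabs (Iinf M z) + 4 * psi M z) ^ 2 <= Cb * Rpower (1 + z) p).
Proof.
have HC0 : 0 < C0 by rewrite /C0; have := Rabs_pos CI; have := Rabs_pos CP; lra.
exists (2 * C0), (Rabs CM + C0 ^ 2); split; first lra.
split; first by have := Rabs_pos CM; nra.
split.
  move=> z Hz; have := tails_le z Hz; have := psi_ge0 M HM z Hz; lra.
move=> z Hz.
have P := psi_ge0 M HM z Hz.
have Rp := Rle_Rpower (1 + z) (- (2 * beta)) p ltac:(lra) Hp.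
have B1 : (Rabs (Iinf M z) + 4 * psi M z) ^ 2 <= C0 ^ 2 * Rpower (1 + z) (- (2 * beta)).
  apply: Rle_trans (_ : _ <= (C0 * Rpower (1 + z) (- gamma)) ^ 2) _.
    by apply: pow_incr; split; [have := Rabs_pos (Iinf M z); lra|exact: tails_le].
  rewrite Rpow_mult_distr; apply: Rmult_le_compat_l; first nra.
  by rewrite /= Rmult_1_r -Rpower_plus; apply: Rle_Rpower; lra.
have B2 : Rabs (M z) <= Rabs CM * Rpower (1 + z) (- (2 * beta)).
  apply: Rle_trans (HCM z ltac:(lra)) _; apply: Rmult_le_compat_r; last exact: Rle_abs.
  by have := Rpower_gt0 (1 + z) (- (2 * beta)); lra.
have := Rabs_pos CM; nra.
Qed.

End DecayConstants.

Theorem proposition1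
  (M : R -> R) (alpha beta gamma : R)
  (* M continuous on [0, oo) *)
  (HMc : forall t, 0 <= t ->
     filterlim M (within (fun x => 0 <= x) (locally t)) (locally (M t)))
  (* parameter constraints *)
  (Ha : alpha <= 1) (Hb : beta < 1) (Hg : 0 < gamma)
  (Habg1 : alpha <> 0 -> gamma >= beta /\ beta >= (alpha + 1) / 2)
  (Habg0 : alpha = 0 -> gamma >= beta /\ beta > 1 / 2)
  (* the improper integrals occurring in (M1)-(M3) exist *)
  (HI1 : forall t, 0 <= t -> ex_Iinf M t)
  (HI2 : forall t, 0 <= t -> ex_Iinf (Iinf M) t)
  (HJ1 : forall t, 0 <= t -> ex_Iinf (fun s => Iinf M s ^ 2) t)
  (HJ2 : forall t, 0 <= t -> ex_Iinf (Iinf (fun s => Iinf M s ^ 2)) t)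
  (* (M1) *)
  (HM1p : 0 <= alpha -> exists C, forall t, 0 <= t ->
     RInt (fun s => Rabs (Iinf (Iinf M) s)) 0 t <= C * Rpower (1 + t) alpha)
  (HM1n : alpha <= 0 ->
     (forall t, 0 <= t -> ex_Iinf (fun s => Rabs (Iinf (Iinf M) s)) t) /\
     exists C, forall t, 0 <= t ->
     Iinf (fun s => Rabs (Iinf (Iinf M) s)) t <= C * Rpower (1 + t) alpha)
  (* (M2) *)
  (HM2 : exists C, forall t, 0 <= t -> Rabs (M t) <= C * Rpower (1 + t) (- (2 * beta)))
  (* (M3) *)
  (HM3a : exists C, forall t, 0 <= t -> Rabs (Iinf M t) <= C * Rpower (1 + t) (- gamma))
  (HM3b : exists C, forall t, 0 <= t ->
     Iinf (fun s => Iinf M s ^ 2) t <= C * Rpower (1 + t) (- gamma))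
  (HM3c : ex_Iinf (Iinf (fun s => Iinf M s ^ 2)) 0)
  (* sup_{t>=0} (1+t)^alpha \int_t^oo \int_s^oo (\int_sigma^oo M)^2 < oo *)
  (Hsup : exists C, forall t, 0 <= t ->
     Rpower (1 + t) alpha * Iinf (Iinf (fun s => Iinf M s ^ 2)) t <= C)
  (* choice of T *)
  (T : R) (HT : 0 < T)
  (HT1 : forall t, T <= t -> Rabs (Iinf (Qk M 1) t) <= 1)
  (HT2 : forall t, T <= t -> phi M t <= / 6 ^ 4)
  (* the solutions W(., xi), xi in R^n *)
  (n : nat) (W : R -> ('I_n -> R) -> C * C)
  (HW : forall xi : 'I_n -> R, solves_W (bfun M) (vnorm n xi) T (fun t => W t xi)) :
  exists N K1 : R, 0 < N /\ 0 < K1 /\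
    forall (xi : 'I_n -> R) (t : R),
      xi <> (fun _ => 0) -> T <= t -> Rpower (1 + t) alpha * vnorm n xi >= N ->
      (0 < alpha ->
         / K1 * C2norm (W (t_xi T N alpha (vnorm n xi)) xi) <= C2norm (W t xi) /\
         C2norm (W t xi) <= K1 * C2norm (W (t_xi T N alpha (vnorm n xi)) xi)) /\
      (alpha <= 0 ->
         / K1 * C2norm (W T xi) <= C2norm (W t xi) /\
         C2norm (W t xi) <= K1 * C2norm (W T xi)).
Proof.
have HM : tails_integrable M.
  split=> [x Hx|t Ht|t Ht|t Ht|t Ht]; [|apply: HI1|apply: HI2|apply: HJ1|apply: HJ2]; try lra.
  by have := HMc x (Rlt_le _ _ Hx); rewrite within_le_locally.
have [a [Ha0 [HaT HPa]]] : exists a, 0 < a /\ a < T /\ Phi M a <= 2 / 1296.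
  apply: exists_Phi_small_below => //; rewrite -phi_Phi //.
  by have := HT2 T (Rle_refl T); rewrite (_ : / 6 ^ 4 = 1 / 1296) //; field.
have Hbg : beta <= gamma by case: (Req_dec alpha 0) => [/Habg0|/Habg1] []; lra.
have Hag : alpha <= gamma by case: (Req_dec alpha 0) => [|/Habg1 []]; lra.
have [p [Hp1 [Hp2 [Hp_neg Hp_pos]]]] :=
  exists_primitive_exponent alpha beta (fun H => proj2 (Habg1 H)) (fun H => proj2 (Habg0 H)).
case: HM2 HM3a HM3b => [CM HCM] [CI HCI] [CP HCP].
have [N [Cb [HN [HCb [Hdecay Hslow]]]]] :=
  decay_constants M HM beta gamma p Hbg Hp2 CM CI CP HCM HCI HCP.
set Kc := zone_constant N Cb p; have HKc : 1 <= Kc by apply: zone_constant_ge1.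
exists N, (sqrt Kc); split => //; split; first by apply: sqrt_lt_R0; lra.
move=> xi t Hxi Ht /Rge_le Hzone; have Hr := vnorm_gt0 n xi Hxi.
have Core := energy_comparable_in_zone M HM a T Ha0 HaT HPa HT1 alpha gamma N Cb p Hag HN HCb Hp1
  Hp_neg Hp_pos Hdecay Hslow (vnorm n xi) (fun z => W z xi) Hr (HW xi).
split=> Halpha.
- have [T1 [T2 Zz]] := t_xi_zone T N alpha (vnorm n xi) t Halpha Hr HN ltac:(lra) Ht Hzone.
  by have [H1 H2] := Core _ t T1 T2 Zz; apply: (C2norm_comparable (fun z => W z xi) Kc).
- have [H1 H2] := Core T t (Rle_refl T) Ht (zone_from_start T N alpha _ t Halpha Hr ltac:(lra) Hzone).
  exact: (C2norm_comparable (fun z => W z xi) Kc).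
Qed.
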